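(* Let $\mathbf{RCat}_{\mathsf{lax}}$, $\mathbf{RCat}$, $\mathbf{LCat}_{\mathsf{lax}}$, $\mathbf{LCat}$ be the 2-categories described in the context, and let $\mathbf{L}_{\mathsf{lax}}:\mathbf{RCat}_{\mathsf{lax}}\to\mathbf{LCat}_{\mathsf{lax}}$ and $\mathbf{R}_{\mathsf{lax}}:\mathbf{LCat}_{\mathsf{lax}}\to\mathbf{RCat}_{\mathsf{lax}}$ be the 2-functors described in the context. Then $\mathbf{L}_{\mathsf{lax}}$ and $\mathbf{R}_{\mathsf{lax}}$ form a 2-equivalence $\mathbf{RCat}_{\mathsf{lax}}\simeq\mathbf{LCat}_{\mathsf{lax}}$. Moreover, this 2-equivalence restricts to a 2-equivalence $\mathbf{RCat}\simeq\mathbf{LCat}$.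
   Context: Composition is written diagrammatically: $fg$ means first $f$ then $g$. Restriction categories. A restriction category is a category $\mathbb{X}$ with an assignment to each morphism $f:A\to B$ of an endomorphism $\bar f:A\to A$ such that: (R.1) $\bar f f=f$; (R.2) $\bar f\bar g=\bar g\bar f$ for $f:A\to B$, $g:A\to C$; (R.3) $\bar g\bar f=\overline{\bar g f}$ for $f:A\to B$, $g:A\to C$; (R.4) $f\bar g=\overline{fg}f$ for $f:A\to B$, $g:B\to C$. A morphism $f$ is total if $\bar f=\mathrm{id}$; a restriction idempotent is an endomorphism $e$ with $e=\bar e$. A restriction functor is a functor $F$ with $F(\bar f)=\overline{F f}$. A restriction natural transformation $\varphi:F\Rightarrow G$ between restriction functors $F,G:\mathbb{X}\to\mathbb{X}'$ is a family of total morphisms $\varphi_A:FA\to GA$ such that $(Ff)\varphi_B=(F\bar f)\varphi_A(Gf)$ for every $f:A\to B$. A total natural transformation is a natural transformation all of whose components are total. $\mathbf{RCat}_{\mathsf{lax}}$ is the 2-category of restriction categories, restriction functors and restriction natural transformations; $\mathbf{RCat}$ is its 2-subcategory with the same objects and 1-cells and with total natural transformations as 2-cells. Local categories. A local category is a category $\mathbb{C}$ with an assignment to each object $M$ of an object $\mathsf{L}M$ and a morphism $\eta_M:M\to\mathsf{L}M$ (no action on morphisms is required) such that: (L.1) $\mathsf{L}\mathsf{L}M=\mathsf{L}M$ and $\eta_{\mathsf{L}M}=\mathrm{id}_{\mathsf{L}M}$; (L.2) each $\eta_M$ is monic; (L.3) for every object $M$ and morphism $f:N\to\mathsf{L}M$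 there is a pullback square of $\eta_M$ along $f$, with leg $m:P\to N$, such that $\mathsf{L}P=\mathsf{L}N$ and $m\eta_N=\eta_P$. An object $M$ is total if $M=\mathsf{L}M$ and $\eta_M=\mathrm{id}_M$. A local functor $F:\mathbb{C}\to\mathbb{C}'$ is a functor with $F\mathsf{L}M=\mathsf{L}'FM$, $F\eta_M=\eta'_{FM}$ for all $M$, which preserves each pullback of $\eta_N$ along every morphism $f:M\to\mathsf{L}N$. A local natural transformation between local functors is just a natural transformation; it is total if for every $M$ the naturality square of $\eta_M$ (with sides $\varphi_M$, $F\eta_M$, $G\eta_M$, $\varphi_{\mathsf{L}M}$) is a pullback. $\mathbf{LCat}_{\mathsf{lax}}$ is the 2-category of local categories, local functors, local natural transformations; $\mathbf{LCat}$ its 2-subcategory with total natural transformations as 2-cells. The 2-functor $\mathbf{L}$. For a restriction category $\mathbb{X}$, $\mathbf{L}[\mathbb{X}]$ has objects pairs $(A,a)$ with $a=\bar a:A\to A$ a restriction idempotent; morphisms $f:(A,a)\to(B,b)$ are morphisms $f:A\to B$ of $\mathbb{X}$ with $\bar f=a$ and $fb=f$; identity on $(A,a)$ is $a$; composition as in $\mathbb{X}$; local structure $\mathsf{L}(A,a)=(A,\mathrm{id}_A)$, $\eta_{(A,a)}=a$. For a restriction functor $F$, $\mathbf{L}[F](A,a)=(FA,Fa)$, $\mathbf{L}[F]f=Ff$; for a restriction natural transformation $\varphi$, $\mathbf{L}[\varphi]_{(A,a)}=(Fa)\varphi_A$. The 2-functor $\mathbf{R}$. For a local category $\mathbb{C}$,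 $\mathbf{R}[\mathbb{C}]$ has as objects the total objects of $\mathbb{C}$; a morphism $M\to N$ is an isomorphism class of pairs $(U,f)$ with $\mathsf{L}U=M$ and $f:U\to N$, where $(U,f)\cong(V,g)$ if there is an isomorphism $\varphi:U\to V$ with $\varphi\eta_V=\eta_U$ and $\varphi g=f$; identity on $M$ is $(M,\mathrm{id}_M)$; the composite of $(U,f):M\to N$ and $(V,g):N\to P$ is $(W,\pi_Vg)$ where $W$ with $\pi_V:W\to V$ is a pullback of $\eta_V$ along $f$; the restriction of $(U,f)$ is $(U,\eta_U)$. For a local functor $F$, $\mathbf{R}[F]M=FM$, $\mathbf{R}[F](U,f)=(FU,Ff)$; for a local natural transformation $\varphi$, $\mathbf{R}[\varphi]_M=(FM,\varphi_M)$. *)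

From Stdlib Require Import ProofIrrelevance IndefiniteDescription JMeq.

Record Cat : Type := mkCat {
  ob :> Type;
  hom : ob -> ob -> Type;
  idm : forall A, hom A A;
  cmp : forall A B C, hom A B -> hom B C -> hom A C }.
Arguments hom {_} _ _.
Arguments idm {_} _.
Arguments cmp {_ _ _ _} _ _.
Notation "f ;; g" := (cmp f g) (at level 40, left associativity).

Record isCat (C : Cat) : Prop := {
  cat_idl : forall (A B : C) (f : hom A B), idm A ;; f = f;
  cat_idr : forall (A B : C) (f : hom A B), f ;; idm B = f;
  cat_assoc : forall (A B C' D : C) (f : hom A B) (g : hom B C') (h : hom C' D),
      (f ;; g) ;; h = f ;; (g ;; h) }.

Definition tr {C : Cat} {A X Y : C} (e : X = Y) (h : hom A X) : hom A Y :=
  eq_rect X (fun Z => hom A Z) h Y e.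

Definition monic {C : Cat} {A B : C} (m : hom A B) : Prop :=
  forall (Z : C) (g h : hom Z A), g ;; m = h ;; m -> g = h.

Definition is_pullback {C : Cat} {P A B D : C}
  (p1 : hom P A) (p2 : hom P B) (f : hom A D) (g : hom B D) : Prop :=
  p1 ;; f = p2 ;; g /\
  forall (Q : C) (q1 : hom Q A) (q2 : hom Q B), q1 ;; f = q2 ;; g ->
    exists! u : hom Q P, u ;; p1 = q1 /\ u ;; p2 = q2.

Record RData : Type := mkRData {
  rcat :> Cat;
  rst : forall (A B : rcat), hom A B -> hom A A }.
Arguments rst {_ _ _} _.

Record isRC (X : RData) : Prop := {
  rc_cat : isCat X;
  R1 : forall (A B : X) (f : hom A B), rst f ;; f = f;
  R2 : forall (A B C : X) (f : hom A B) (g : hom A C), rst f ;; rst g = rst g ;; rst f;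
  R3 : forall (A B C : X) (f : hom A B) (g : hom A C), rst g ;; rst f = rst (rst g ;; f);
  R4 : forall (A B C : X) (f : hom A B) (g : hom B C), f ;; rst g = rst (f ;; g) ;; f }.

Definition rtotal {X : RData} {A B : X} (f : hom A B) : Prop := rst f = idm A.

Record LData : Type := mkLData {
  lcat :> Cat;
  Lo : lcat -> lcat;
  eta : forall M : lcat, hom M (Lo M) }.
Arguments Lo {_} _.
Arguments eta {_} _.

Record isLC (C : LData) : Prop := {
  lc_cat : isCat C;
  L1a : forall M : C, Lo (Lo M) = Lo M;
  L1b : forall M : C, tr (L1a M) (eta (Lo M)) = idm (Lo M);
  L2 : forall M : C, monic (eta M);
  L3 : forall (M N : C) (f : hom N (Lo M)),
      exists (P : C) (m : hom P N) (k : hom P M) (e : Lo P = Lo N),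
        is_pullback m k f (eta M) /\ m ;; eta N = tr e (eta P) }.

Record FData (C D : Cat) : Type := mkF {
  fo :> C -> D;
  fm : forall A B : C, hom A B -> hom (fo A) (fo B) }.
Arguments mkF {_ _} _ _.
Arguments fo {_ _} _ _.
Arguments fm {_ _} _ {_ _} _.

Record isFunctor {C D : Cat} (F : FData C D) : Prop := {
  f_id : forall A : C, fm F (idm A) = idm (F A);
  f_cmp : forall (A B E : C) (f : hom A B) (g : hom B E), fm F (f ;; g) = fm F f ;; fm F g }.

Definition isRFunctor {X Y : RData} (F : FData X Y) : Prop :=
  isFunctor F /\ forall (A B : X) (f : hom A B), fm F (rst f) = rst (fm F f).

Record isLFunctor {C D : LData} (F : FData C D) : Prop := {
  lf_fun : isFunctor F;
  lf_obj : forall M : C, F (Lo M) = Lo (F M);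
  lf_eta : forall M : C, tr (lf_obj M) (fm F (eta M)) = eta (F M);
  lf_pb : forall (M N P : C) (f : hom M (Lo N)) (p1 : hom P M) (p2 : hom P N),
      is_pullback p1 p2 f (eta N) ->
      is_pullback (fm F p1) (fm F p2) (fm F f) (fm F (eta N)) }.

Definition NT {C D : Cat} (F G : FData C D) : Type := forall A : C, hom (F A) (G A).

Definition isNat {C D : Cat} {F G : FData C D} (a : NT F G) : Prop :=
  forall (A B : C) (f : hom A B), fm F f ;; a B = a A ;; fm G f.

(* 2-cells of RCat_lax *)
Definition isRNT {X Y : RData} {F G : FData X Y} (a : NT F G) : Prop :=
  (forall A : X, rtotal (a A)) /\
  forall (A B : X) (f : hom A B), fm F f ;; a B = fm F (rst f) ;; a A ;; fm G f.
(* 2-cells of RCat: total natural transformations *)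
Definition isRTotNT {X Y : RData} {F G : FData X Y} (a : NT F G) : Prop :=
  isRNT a /\ isNat a.
(* 2-cells of LCat_lax *)
Definition isLNT {C D : LData} {F G : FData C D} (a : NT F G) : Prop := isNat a.
(* 2-cells of LCat: total local natural transformations *)
Definition isLTotNT {C D : LData} {F G : FData C D} (a : NT F G) : Prop :=
  isNat a /\
  forall M : C, is_pullback (a M) (fm F (eta M)) (fm G (eta M)) (a (Lo M)).

Definition fid (C : Cat) : FData C C := mkF (fun x => x) (fun x y f => f).
Definition fcomp {A B C : Cat} (F : FData A B) (G : FData B C) : FData A C :=
  mkF (fun x => G (F x)) (fun x y f => fm G (fm F f)).
Definition ntid {C D : Cat} (F : FData C D) : NT F F := fun A => idm (F A).
Definition vcomp {C D : Cat} {F G H : FData C D} (a : NT F G) (b : NT G H) : NT F H :=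
  fun A => a A ;; b A.
Definition whiskL {A B C : Cat} (K : FData A B) {F G : FData B C} (a : NT F G)
  : NT (fcomp K F) (fcomp K G) := fun x => a (K x).
Definition whiskR {A B C : Cat} {F G : FData A B} (a : NT F G) (K : FData B C)
  : NT (fcomp F K) (fcomp G K) := fun x => fm K (a x).

(* equality of functors / of natural transformations (between possibly
   only propositionally equal functors) *)
Definition feq {C D : Cat} (F G : FData C D) : Prop :=
  (forall A : C, F A = G A) /\
  forall (A B : C) (f : hom A B), JMeq (fm F f) (fm G f).
Definition nteq {C D : Cat} {F G F' G' : FData C D} (a : NT F G) (b : NT F' G') : Prop :=
  forall A : C, JMeq (a A) (b A).

(* equivalences (internal to the 2-categories), parametrised by the
   class of admissible 2-cells *)
Definition rc_equiv
  (P2 : forall (A B : RData) (F G : FData A B), NT F G -> Prop)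
  {X Y : RData} (F : FData X Y) : Prop :=
  exists G : FData Y X, isRFunctor G /\
  exists (u : NT (fid X) (fcomp F G)) (u' : NT (fcomp F G) (fid X))
         (v : NT (fid Y) (fcomp G F)) (v' : NT (fcomp G F) (fid Y)),
    P2 X X _ _ u /\ P2 X X _ _ u' /\ P2 Y Y _ _ v /\ P2 Y Y _ _ v' /\
    vcomp u u' = ntid (fid X) /\ vcomp u' u = ntid (fcomp F G) /\
    vcomp v v' = ntid (fid Y) /\ vcomp v' v = ntid (fcomp G F).

Definition lc_equiv
  (P2 : forall (A B : LData) (F G : FData A B), NT F G -> Prop)
  {C D : LData} (F : FData C D) : Prop :=
  exists G : FData D C, isLFunctor G /\
  exists (u : NT (fid C) (fcomp F G)) (u' : NT (fcomp F G) (fid C))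
         (v : NT (fid D) (fcomp G F)) (v' : NT (fcomp G F) (fid D)),
    P2 C C _ _ u /\ P2 C C _ _ u' /\ P2 D D _ _ v /\ P2 D D _ _ v' /\
    vcomp u u' = ntid (fid C) /\ vcomp u' u = ntid (fcomp F G) /\
    vcomp v v' = ntid (fid D) /\ vcomp v' v = ntid (fcomp G F).

Lemma rst_id {X : RData} (HX : isRC X) (A : X) : rst (idm A) = idm A.
Proof.
  transitivity (rst (idm A) ;; idm A).
  - symmetry; apply (cat_idr _ (rc_cat _ HX)).
  - apply (R1 _ HX).
Qed.

Lemma ridem {X : RData} (HX : isRC X) {A : X} (a : hom A A) : rst a = a -> a ;; a = a.
Proof. intros H. rewrite <- H at 1. apply (R1 _ HX). Qed.

Lemma rst_cmp_rst {X : RData} (HX : isRC X) {A B C : X} (f : hom A B) (g : hom B C) :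
  rst (f ;; rst g) = rst (f ;; g).
Proof.
  rewrite (R4 _ HX _ _ _ f g).
  rewrite <- (R3 _ HX _ _ _ f (f ;; g)).
  rewrite (R2 _ HX _ _ _ (f ;; g) f).
  rewrite (R3 _ HX _ _ _ (f ;; g) f).
  rewrite <- (cat_assoc _ (rc_cat _ HX)).
  rewrite (R1 _ HX). reflexivity.
Qed.

Record LObj (X : RData) : Type := mkLObj {
  lo_ob : X; lo_id : hom lo_ob lo_ob; lo_ok : rst lo_id = lo_id }.
Arguments mkLObj {_} _ _ _.
Arguments lo_ob {_} _.
Arguments lo_id {_} _.
Arguments lo_ok {_} _.

Record LHom (X : RData) (x y : LObj X) : Type := mkLHom {
  lh : hom (lo_ob x) (lo_ob y);
  lh_r : rst lh = lo_id x;
  lh_c : lh ;; lo_id y = lh }.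
Arguments mkLHom {_ _ _} _ _ _.
Arguments lh {_ _ _} _.
Arguments lh_r {_ _ _} _.
Arguments lh_c {_ _ _} _.

Definition LD_idm {X : RData} (HX : isRC X) (x : LObj X) : LHom X x x :=
  mkLHom (lo_id x) (lo_ok x) (ridem HX (lo_id x) (lo_ok x)).

Lemma LD_cmp_r {X : RData} (HX : isRC X) {x y z : LObj X} (f : LHom X x y) (g : LHom X y z) :
  rst (lh f ;; lh g) = lo_id x.
Proof.
  rewrite <- (rst_cmp_rst HX). rewrite (lh_r g). rewrite (lh_c f). exact (lh_r f).
Qed.

Lemma LD_cmp_c {X : RData} (HX : isRC X) {x y z : LObj X} (f : LHom X x y) (g : LHom X y z) :
  (lh f ;; lh g) ;; lo_id z = lh f ;; lh g.
Proof. rewrite (cat_assoc _ (rc_cat _ HX)). rewrite (lh_c g). reflexivity. Qed.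

Definition LD_cmp {X : RData} (HX : isRC X) {x y z : LObj X} (f : LHom X x y) (g : LHom X y z)
  : LHom X x z := mkLHom (lh f ;; lh g) (LD_cmp_r HX f g) (LD_cmp_c HX f g).

Definition LCat (X : RData) (HX : isRC X) : Cat :=
  mkCat (LObj X) (LHom X) (LD_idm HX) (fun x y z f g => LD_cmp HX f g).

Definition Lo_L {X : RData} (HX : isRC X) (x : LObj X) : LObj X :=
  mkLObj (lo_ob x) (idm (lo_ob x)) (rst_id HX (lo_ob x)).

Definition eta_L {X : RData} (HX : isRC X) (x : LObj X) : LHom X x (Lo_L HX x) :=
  mkLHom (y := Lo_L HX x) (lo_id x) (lo_ok x) (cat_idr _ (rc_cat _ HX) _ _ (lo_id x)).

Definition LD (X : RData) (HX : isRC X) : LData :=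
  mkLData (LCat X HX) (Lo_L HX) (eta_L HX).

Definition LF_ob {X Y : RData} {F : FData X Y} (HF : isRFunctor F) (x : LObj X) : LObj Y :=
  mkLObj (F (lo_ob x)) (fm F (lo_id x))
    (eq_trans (eq_sym (proj2 HF _ _ (lo_id x))) (f_equal (fm F) (lo_ok x))).

Definition LF_hom {X Y : RData} {F : FData X Y} (HF : isRFunctor F) {x y : LObj X}
  (f : LHom X x y) : LHom Y (LF_ob HF x) (LF_ob HF y) :=
  mkLHom (x := LF_ob HF x) (y := LF_ob HF y) (fm F (lh f))
    (eq_trans (eq_sym (proj2 HF _ _ (lh f))) (f_equal (fm F) (lh_r f)))
    (eq_trans (eq_sym (f_cmp _ (proj1 HF) _ _ _ (lh f) (lo_id y))) (f_equal (fm F) (lh_c f))).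

Definition LF {X Y : RData} (HX : isRC X) (HY : isRC Y) {F : FData X Y} (HF : isRFunctor F)
  : FData (LD X HX) (LD Y HY) :=
  mkF (C := LD X HX) (D := LD Y HY) (LF_ob HF) (fun x y f => LF_hom HF f).

Lemma LN_r {X Y : RData} (HY : isRC Y) {F G : FData X Y} (HF : isRFunctor F)
  {a : NT F G} (Ha : isRNT a) (x : LObj X) :
  rst (fm F (lo_id x) ;; a (lo_ob x)) = fm F (lo_id x).
Proof.
  rewrite <- (rst_cmp_rst HY). rewrite (proj1 Ha (lo_ob x)).
  rewrite (cat_idr _ (rc_cat _ HY)). rewrite <- (proj2 HF). rewrite (lo_ok x). reflexivity.
Qed.

Lemma LN_c {X Y : RData} {F G : FData X Y} {a : NT F G} (Ha : isRNT a) (x : LObj X) :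
  (fm F (lo_id x) ;; a (lo_ob x)) ;; fm G (lo_id x) = fm F (lo_id x) ;; a (lo_ob x).
Proof.
  pose proof (proj2 Ha _ _ (lo_id x)) as E. rewrite (lo_ok x) in E. symmetry; exact E.
Qed.

Definition LN {X Y : RData} (HX : isRC X) (HY : isRC Y) {F G : FData X Y}
  (HF : isRFunctor F) (HG : isRFunctor G) {a : NT F G} (Ha : isRNT a)
  : NT (LF HX HY HF) (LF HX HY HG) :=
  fun x => mkLHom (x := LF_ob HF x) (y := LF_ob HG x)
             (fm F (lo_id x) ;; a (lo_ob x)) (LN_r HY HF Ha x) (LN_c Ha x).

Record TObj (C : LData) : Type := mkTObj {
  to_ob : C; to_eq : Lo to_ob = to_ob; to_eta : tr to_eq (eta to_ob) = idm to_ob }.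
Arguments mkTObj {_} _ _ _.
Arguments to_ob {_} _.
Arguments to_eq {_} _.
Arguments to_eta {_} _.

Record Span (C : LData) (M N : C) : Type := mkSpan {
  sp_ob : C; sp_eq : Lo sp_ob = M; sp_mor : hom sp_ob N }.
Arguments mkSpan {_ _ _} _ _ _.
Arguments sp_ob {_ _ _} _.
Arguments sp_eq {_ _ _} _.
Arguments sp_mor {_ _ _} _.

Definition sp_iso {C : LData} {M N : C} (p q : Span C M N) : Prop :=
  exists (u : hom (sp_ob p) (sp_ob q)) (v : hom (sp_ob q) (sp_ob p)),
    u ;; v = idm _ /\ v ;; u = idm _ /\
    u ;; eta (sp_ob q) = tr (eq_trans (sp_eq p) (eq_sym (sp_eq q))) (eta (sp_ob p)) /\
    u ;; sp_mor q = sp_mor p.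

(* morphisms of R[C]: isomorphism classes of pairs *)
Definition RHom {C : LData} (M N : C) : Type :=
  { P : Span C M N -> Prop | exists p, P = sp_iso p }.

Definition cls {C : LData} {M N : C} (p : Span C M N) : RHom M N :=
  exist _ (sp_iso p) (ex_intro _ p eq_refl).

Definition rep {C : LData} {M N : C} (x : RHom M N) : Span C M N :=
  proj1_sig (constructive_indefinite_description _ (proj2_sig x)).

Definition pbc {C : LData} (HC : isLC C) (M N : C) (f : hom N (Lo M)) :
  { P : C & { m : hom P N & { k : hom P M & { e : Lo P = Lo N |
     is_pullback m k f (eta M) /\ m ;; eta N = tr e (eta P) } } } }.
Proof.
  pose proof (L3 _ HC M N f) as H.
  apply constructive_indefinite_description in H. destruct H as [P H]. exists P.
  apply constructive_indefinite_description in H. destruct H as [m H]. exists m.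
  apply constructive_indefinite_description in H. destruct H as [k H]. exists k.
  apply constructive_indefinite_description in H. destruct H as [e H]. exists e.
  exact H.
Defined.

Definition Ridm {C : LData} (M : TObj C) : RHom (to_ob M) (to_ob M) :=
  cls (mkSpan (to_ob M) (to_eq M) (idm (to_ob M))).

(* (U,f);(V,g) = (W, pi_V g), W a pullback of eta_V along f *)
Definition Rcmp {C : LData} (HC : isLC C) {M N P : C} (x : RHom M N) (y : RHom N P)
  : RHom M P :=
  let p := rep x in
  let q := rep y in
  let pb := pbc HC (sp_ob q) (sp_ob p) (tr (eq_sym (sp_eq q)) (sp_mor p)) in
  cls (mkSpan (projT1 pb)
          (eq_trans (proj1_sig (projT2 (projT2 (projT2 pb)))) (sp_eq p))
          (projT1 (projT2 (projT2 pb)) ;; sp_mor q)).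

Definition Rrst {C : LData} {M N : C} (x : RHom M N) : RHom M M :=
  let p := rep x in cls (mkSpan (sp_ob p) (sp_eq p) (tr (sp_eq p) (eta (sp_ob p)))).

Definition RCat (C : LData) (HC : isLC C) : Cat :=
  mkCat (TObj C) (fun M N => RHom (to_ob M) (to_ob N)) Ridm
        (fun M N P x y => Rcmp HC x y).

Definition RD (C : LData) (HC : isLC C) : RData :=
  mkRData (RCat C HC) (fun M N x => Rrst x).

Lemma fm_tr {C D : Cat} (F : FData C D) {A X Y : C} (e : X = Y) (h : hom A X) :
  fm F (tr e h) = tr (f_equal (fo F) e) (fm F h).
Proof. destruct e. reflexivity. Qed.

Lemma tr_tr {C : Cat} {A X Y Z : C} (e1 : X = Y) (e2 : Y = Z) (h : hom A X) :
  tr e2 (tr e1 h) = tr (eq_trans e1 e2) h.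
Proof. destruct e2. reflexivity. Qed.

Definition RF_eq {C D : LData} {F : FData C D} (HF : isLFunctor F) (M : TObj C) :
  Lo (F (to_ob M)) = F (to_ob M) :=
  eq_trans (eq_sym (lf_obj _ HF (to_ob M))) (f_equal (fo F) (to_eq M)).

Lemma RF_eta {C D : LData} {F : FData C D} (HF : isLFunctor F) (M : TObj C) :
  tr (RF_eq HF M) (eta (F (to_ob M))) = idm (F (to_ob M)).
Proof.
  rewrite <- (lf_eta _ HF). rewrite tr_tr.
  rewrite (proof_irrelevance _ (eq_trans (lf_obj F HF (to_ob M)) (RF_eq HF M))
             (f_equal (fo F) (to_eq M))).
  rewrite <- fm_tr. rewrite (to_eta M). apply (f_id _ (lf_fun _ HF)).
Qed.

Definition RF_ob {C D : LData} {F : FData C D} (HF : isLFunctor F) (M : TObj C) : TObj D :=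
  mkTObj (F (to_ob M)) (RF_eq HF M) (RF_eta HF M).

Definition RF_span {C D : LData} {F : FData C D} (HF : isLFunctor F) {M N : C}
  (p : Span C M N) : Span D (F M) (F N) :=
  mkSpan (F (sp_ob p)) (eq_trans (eq_sym (lf_obj _ HF (sp_ob p))) (f_equal (fo F) (sp_eq p)))
         (fm F (sp_mor p)).

Definition RF {C D : LData} (HC : isLC C) (HD : isLC D) {F : FData C D} (HF : isLFunctor F)
  : FData (RD C HC) (RD D HD) :=
  mkF (C := RD C HC) (D := RD D HD) (RF_ob HF)
      (fun M N x => cls (RF_span HF (rep x))).

Definition RN {C D : LData} (HC : isLC C) (HD : isLC D) {F G : FData C D}
  (HF : isLFunctor F) (HG : isLFunctor G) (a : NT F G) : NT (RF HC HD HF) (RF HC HD HG) :=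
  fun M => cls (mkSpan (M := F (to_ob M)) (N := G (to_ob M))
                       (F (to_ob M)) (RF_eq HF M) (a (to_ob M))).

From Stdlib Require Import JMeq ProofIrrelevance IndefiniteDescription
  FunctionalExtensionality PropExtensionality.
From Stdlib Require ClassicalEpsilon.

(* A partial map f : A -> B of a restriction category X is the same thing as
   the morphism f : (A, rst f) -> (B, id) of L[X]; this identifies X with
   R[L[X]] up to proof-irrelevant data, so the unit X -> R[L[X]] is an
   isomorphism with identity components.  Conversely, a restriction idempotent
   of R[C] on a total object L M is the class of some eta_U : U -> L M, and
   sending it to U gives a functor L[R[C]] -> C inverse to M |-> (L M, [eta_M])
   up to the isomorphisms between representatives of a class.  Equivalences
   preserve pullbacks, hence both functors are local.  Naturality of phi makes
   the eta-squares of L[phi] pullbacks, and pullback eta-squares make R[phi]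
   natural, so the equivalences restrict to total 2-cells. *)

(** * Pullbacks and equivalences of categories *)

Section Transport.
Context {C : Cat}.

Lemma tr_cmp {A B X Y : C} (e : X = Y) (f : hom A B) (g : hom B X) :
  tr e (f ;; g) = f ;; tr e g.
Proof. destruct e. reflexivity. Qed.

Lemma tr_symK {A X Y : C} (e : X = Y) (h : hom A X) : tr (eq_sym e) (tr e h) = h.
Proof. destruct e. reflexivity. Qed.

Lemma tr_Ksym {A X Y : C} (e : X = Y) (h : hom A Y) : tr e (tr (eq_sym e) h) = h.
Proof. destruct e. reflexivity. Qed.

Lemma tr_irrelevance {A X Y : C} (e1 e2 : X = Y) (h : hom A X) : tr e1 h = tr e2 h.
Proof. rewrite (proof_irrelevance _ e1 e2). reflexivity. Qed.

Lemma tr_JMeq {A X Y : C} (e : X = Y) (h : hom A X) : JMeq (tr e h) h.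
Proof. destruct e. reflexivity. Qed.

Lemma cmp_tr_JMeq {A B Y Y' : C} (h : hom A B) (g : hom B Y) (e : Y = Y') :
  JMeq (h ;; g) (h ;; tr e g).
Proof. destruct e. reflexivity. Qed.

Lemma monic_tr {A X Y : C} (e : X = Y) (m : hom A X) : monic m -> monic (tr e m).
Proof. destruct e. auto. Qed.

Lemma is_pullback_tr {P A B D D' : C} (p1 : hom P A) (p2 : hom P B)
  (f : hom A D) (g : hom B D) (e : D = D') :
  is_pullback p1 p2 f g -> is_pullback p1 p2 (tr e f) (tr e g).
Proof. destruct e. auto. Qed.

End Transport.

Definition is_inverse {C : Cat} {A B : C} (f : hom A B) (g : hom B A) : Prop :=
  f ;; g = idm A /\ g ;; f = idm B.

Lemma is_pullback_sym {C : Cat} {P A B D : C} (p1 : hom P A) (p2 : hom P B)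
  (f : hom A D) (g : hom B D) :
  is_pullback p1 p2 f g -> is_pullback p2 p1 g f.
Proof.
  intros [Hc Hu]. split; [auto|].
  intros Q q1 q2 Hq. destruct (Hu Q q2 q1 (eq_sym Hq)) as [u [[Hu1 Hu2] Hu']].
  exists u. split; [auto|]. intros u' [H1 H2]. apply Hu'; auto.
Qed.

Section Pullbacks.
Context {C : Cat} (HC : isCat C).
Let idl := cat_idl _ HC.
Let idr := cat_idr _ HC.
Let assoc := cat_assoc _ HC.

Lemma is_pullback_iso_cospan {P A B D A' B' : C}
  (m : hom P A) (k : hom P B) (f : hom A D) (g : hom B D)
  (a : hom A A') (a' : hom A' A) (b : hom B B') (b' : hom B' B)
  (f' : hom A' D) (g' : hom B' D) :
  is_pullback m k f g -> is_inverse a a' -> is_inverse b b' ->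
  a ;; f' = f -> b ;; g' = g -> is_pullback (m ;; a) (k ;; b) f' g'.
Proof.
  intros [Hc Hu] [Ha1 Ha2] [Hb1 Hb2] Ef Eg.
  assert (Ef' : f' = a' ;; f) by (rewrite <- Ef, <- assoc, Ha2, idl; reflexivity).
  assert (Eg' : g' = b' ;; g) by (rewrite <- Eg, <- assoc, Hb2, idl; reflexivity).
  split.
  - rewrite !assoc, Ef, Eg. exact Hc.
  - intros Q q1 q2 Hq.
    assert (Hq' : (q1 ;; a') ;; f = (q2 ;; b') ;; g)
      by (rewrite !assoc, <- Ef', <- Eg'; exact Hq).
    destruct (Hu Q _ _ Hq') as [u [[Hu1 Hu2] Huu]].
    exists u. split; [split|].
    + rewrite <- assoc, Hu1, assoc, Ha2, idr. reflexivity.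
    + rewrite <- assoc, Hu2, assoc, Hb2, idr. reflexivity.
    + intros u' [H1 H2]. apply Huu. split.
      * rewrite <- H1, !assoc, Ha1, idr. reflexivity.
      * rewrite <- H2, !assoc, Hb1, idr. reflexivity.
Qed.

Lemma pullback_unique_up_to_iso {P Q A B D : C}
  (p1 : hom P A) (p2 : hom P B) (q1 : hom Q A) (q2 : hom Q B) (f : hom A D) (g : hom B D) :
  is_pullback p1 p2 f g -> is_pullback q1 q2 f g ->
  exists (u : hom P Q) (v : hom Q P), is_inverse u v /\ u ;; q1 = p1 /\ u ;; q2 = p2.
Proof.
  intros [Hp Hpu] [Hq Hqu].
  destruct (Hqu P p1 p2 Hp) as [u [[Hu1 Hu2] _]].
  destruct (Hpu Q q1 q2 Hq) as [v [[Hv1 Hv2] _]].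
  exists u, v. split; [split|split; auto].
  - destruct (Hpu P p1 p2 Hp) as [w [_ Hw]].
    transitivity w; [symmetry|]; apply Hw; split;
      rewrite ?assoc, ?Hv1, ?Hv2, ?idl; auto.
  - destruct (Hqu Q q1 q2 Hq) as [w [_ Hw]].
    transitivity w; [symmetry|]; apply Hw; split;
      rewrite ?assoc, ?Hu1, ?Hu2, ?idl; auto.
Qed.

Lemma is_pullback_monic {A B D : C} (h : hom A B) (g : hom B D) :
  monic g -> is_pullback (idm A) h (h ;; g) g.
Proof.
  intros Hg. split.
  - rewrite idl. reflexivity.
  - intros Q q1 q2 Hq. exists q1. split.
    + split; [apply idr|]. apply Hg. rewrite <- Hq, assoc. reflexivity.
    + intros u [H1 _]. rewrite <- H1, idr. reflexivity.
Qed.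

Lemma is_pullback_monic_idm {A B : C} (g : hom A B) :
  monic g -> is_pullback (idm A) (idm A) g g.
Proof. intros Hg. pose proof (is_pullback_monic (idm A) g Hg) as H. rewrite idl in H. exact H. Qed.

Lemma is_pullback_iso {A B D : C} (f : hom A D) (g : hom B D) (g' : hom D B) :
  is_inverse g g' -> is_pullback (idm A) (f ;; g') f g.
Proof.
  intros [H1 H2]. split.
  - rewrite idl, assoc, H2, idr. reflexivity.
  - intros Q q1 q2 Hq. exists q1. split.
    + split; [apply idr|]. rewrite <- assoc, Hq, assoc, H1, idr. reflexivity.
    + intros u [Hu _]. rewrite <- Hu, idr. reflexivity.
Qed.

Lemma is_pullback_idm {B D : C} (g : hom B D) : is_pullback g (idm B) (idm D) g.
Proof.
  split.
  - rewrite idr, idl. reflexivity.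
  - intros Q q1 q2 Hq. exists q2. split.
    + split; [|apply idr]. rewrite <- Hq, idr. reflexivity.
    + intros u [_ Hu]. rewrite <- Hu, idr. reflexivity.
Qed.

(* Pasting in the shape arising from associativity of span composition. *)
Lemma is_pullback_paste {U V T D N2 W1 W2 W3 : C}
  (f : hom U D) (e : hom V D) (g : hom V N2) (h : hom T N2)
  (m1 : hom W1 U) (k1 : hom W1 V) (m3 : hom W3 V) (k3 : hom W3 T)
  (m2 : hom W2 W1) (k2 : hom W2 T) (u : hom W2 W3) :
  is_pullback m1 k1 f e -> is_pullback m3 k3 g h -> is_pullback m2 k2 (k1 ;; g) h ->
  u ;; m3 = m2 ;; k1 -> u ;; k3 = k2 ->
  is_pullback (m2 ;; m1) u f (m3 ;; e).
Proof.
  intros [C1 P1] [C3 P3] [C2 P2] Hu1 Hu2. split.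
  - rewrite assoc, C1, <- assoc, <- Hu1, assoc. reflexivity.
  - intros Q q1 q2 Hq.
    assert (E1 : q1 ;; f = (q2 ;; m3) ;; e) by (rewrite assoc; exact Hq).
    destruct (P1 Q _ _ E1) as [w1 [[Hw1a Hw1b] Hw1u]].
    assert (E2 : w1 ;; (k1 ;; g) = (q2 ;; k3) ;; h)
      by (rewrite <- assoc, Hw1b, !assoc, C3; reflexivity).
    destruct (P2 Q _ _ E2) as [w2 [[Hw2a Hw2b] Hw2u]].
    assert (Hw2c : w2 ;; u = q2).
    { assert (E3 : (q2 ;; m3) ;; g = (q2 ;; k3) ;; h) by (rewrite !assoc, C3; reflexivity).
      destruct (P3 Q _ _ E3) as [w3 [_ Hw3u]].
      transitivity w3; [symmetry|]; apply Hw3u; split; auto.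
      - rewrite assoc, Hu1, <- assoc, Hw2a. exact Hw1b.
      - rewrite assoc, Hu2. exact Hw2b. }
    exists w2. split.
    + split; auto. rewrite <- assoc, Hw2a. exact Hw1a.
    + intros w' [H1 H2]. apply Hw2u. split.
      * symmetry. apply Hw1u. split.
        -- rewrite assoc. exact H1.
        -- rewrite assoc, <- Hu1, <- assoc, H2. reflexivity.
      * rewrite <- Hu2, <- assoc, H2. reflexivity.
Qed.

End Pullbacks.

Definition nat_iso {C D : Cat} {F G : FData C D} (a : NT F G) (b : NT G F) : Prop :=
  isNat a /\ forall A : C, is_inverse (a A) (b A).

Section NaturalIsos.
Context {C D : Cat} (HD : isCat D).
Let idl := cat_idl _ HD.
Let idr := cat_idr _ HD.
Let assoc := cat_assoc _ HD.

Lemma nat_iso_sym {F G : FData C D} (a : NT F G) (b : NT G F) : nat_iso a b -> nat_iso b a.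
Proof.
  intros [Ha Hab]. split; [|intros A; split; apply Hab].
  intros A B f.
  transitivity (b A ;; (a A ;; fm G f) ;; b B).
  - rewrite <- assoc, (proj2 (Hab A)), idl. reflexivity.
  - rewrite <- (Ha _ _ f), !assoc, (proj1 (Hab B)), idr. reflexivity.
Qed.

Lemma nat_iso_vcomp {F G : FData C D} (a : NT F G) (b : NT G F) :
  nat_iso a b -> vcomp a b = ntid F /\ vcomp b a = ntid G.
Proof.
  intros [_ Hab]. split; apply functional_extensionality_dep; intros A; apply Hab.
Qed.

Lemma nat_iso_square_pullback {F G : FData C D} (a : NT F G) (b : NT G F) {M N : C} (h : hom M N) :
  nat_iso a b -> is_pullback (a M) (fm F h) (fm G h) (a N).
Proof.
  intros Hiso. destruct (nat_iso_sym a b Hiso) as [Hb _]. destruct Hiso as [Ha Hab].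
  destruct (Hab M) as [HM1 HM2]. destruct (Hab N) as [HN1 HN2].
  split; [symmetry; apply Ha|].
  intros Q q1 q2 Hq. exists (q1 ;; b M). split; [split|].
  - rewrite assoc, HM2, idr. reflexivity.
  - rewrite assoc, <- (Hb _ _ h), <- assoc, Hq, assoc, HN1, idr. reflexivity.
  - intros u' [H1 _]. rewrite <- H1, assoc, HM1, idr. reflexivity.
Qed.

End NaturalIsos.

Lemma rc_equiv_of_nat_isos (P2 : forall (A B : RData) (F G : FData A B), NT F G -> Prop)
  {X Y : RData} {F : FData X Y} (G : FData Y X)
  (u : NT (fid X) (fcomp F G)) (u' : NT (fcomp F G) (fid X))
  (v : NT (fid Y) (fcomp G F)) (v' : NT (fcomp G F) (fid Y)) :
  isRFunctor G -> nat_iso u u' -> nat_iso v v' ->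
  P2 _ _ _ _ u -> P2 _ _ _ _ u' -> P2 _ _ _ _ v -> P2 _ _ _ _ v' -> rc_equiv P2 F.
Proof.
  intros HG Huu Hvv Hu Hu' Hv Hv'. exists G. split; [exact HG|]. exists u, u', v, v'.
  destruct (nat_iso_vcomp u u' Huu), (nat_iso_vcomp v v' Hvv). tauto.
Qed.

Lemma lc_equiv_of_nat_isos (P2 : forall (A B : LData) (F G : FData A B), NT F G -> Prop)
  {C D : LData} {F : FData C D} (G : FData D C)
  (u : NT (fid C) (fcomp F G)) (u' : NT (fcomp F G) (fid C))
  (v : NT (fid D) (fcomp G F)) (v' : NT (fcomp G F) (fid D)) :
  isLFunctor G -> nat_iso u u' -> nat_iso v v' ->
  P2 _ _ _ _ u -> P2 _ _ _ _ u' -> P2 _ _ _ _ v -> P2 _ _ _ _ v' -> lc_equiv P2 F.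
Proof.
  intros HG Huu Hvv Hu Hu' Hv Hv'. exists G. split; [exact HG|]. exists u, u', v, v'.
  destruct (nat_iso_vcomp u u' Huu), (nat_iso_vcomp v v' Hvv). tauto.
Qed.

Lemma nat_iso_isLTotNT {C D : LData} (HD : isLC D) {F G : FData C D} (a : NT F G) (b : NT G F) :
  nat_iso a b -> isLTotNT a.
Proof.
  intros H. split; [apply H|]. intros M. apply (nat_iso_square_pullback (lc_cat _ HD) a b), H.
Qed.

Lemma unit_iso_faithful {C D : Cat} (HC : isCat C) {F : FData C D} {G : FData D C}
  (u : NT (fid C) (fcomp F G)) (u' : NT (fcomp F G) (fid C)) :
  nat_iso u u' -> forall (A B : C) (h k : hom A B), fm F h = fm F k -> h = k.
Proof.
  intros [Hnat Hinv] A B. cbn in Hinv.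
  assert (Eh : forall x : hom A B, x = u A ;; fm G (fm F x) ;; u' B).
  { intros x. pose proof (Hnat _ _ x) as E. cbn in E |- *. rewrite <- E.
    rewrite (cat_assoc _ HC), (proj1 (Hinv B)), (cat_idr _ HC). reflexivity. }
  intros h k E. rewrite (Eh h), (Eh k), E. reflexivity.
Qed.

Section Equivalences.
Context {C D : Cat} (HC : isCat C) (HD : isCat D).
Context {F : FData C D} {G : FData D C} (FF : isFunctor F).
Context (u : NT (fid C) (fcomp F G)) (u' : NT (fcomp F G) (fid C)).
Context (v : NT (fid D) (fcomp G F)) (v' : NT (fcomp G F) (fid D)).
Hypotheses (Hu : nat_iso u u') (Hv : nat_iso v v').
Let assoc := cat_assoc _ HD.

Lemma equivalence_full {A B : C} (y : hom (F A) (F B)) : exists x : hom A B, fm F x = y.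
Proof.
  destruct (nat_iso_sym HC u u' Hu) as [Hnat' Hinv']. cbn in Hinv'.
  exists (u A ;; fm G y ;; u' B).
  apply (unit_iso_faithful HD v v' Hv).
  transitivity (u' A ;; (u A ;; fm G y ;; u' B) ;; u B).
  - set (x := u A ;; fm G y ;; u' B).
    pose proof (Hnat' _ _ x) as E. cbn in E |- *.
    rewrite <- E, (cat_assoc _ HC), (proj1 (Hinv' B)), (cat_idr _ HC). reflexivity.
  - cbn. rewrite !(cat_assoc _ HC), (proj1 (Hinv' B)), (cat_idr _ HC), <- (cat_assoc _ HC),
      (proj1 (Hinv' A)), (cat_idl _ HC). reflexivity.
Qed.

Lemma equivalence_preserves_pullback {P A B E : C}
  (p1 : hom P A) (p2 : hom P B) (f : hom A E) (g : hom B E) :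
  is_pullback p1 p2 f g -> is_pullback (fm F p1) (fm F p2) (fm F f) (fm F g).
Proof.
  intros [Hc Hp].
  pose proof (unit_iso_faithful HC u u' Hu) as Faithful.
  destruct Hv as [_ Hvinv]. cbn in Hvinv.
  split.
  - rewrite <- !(f_cmp _ FF), Hc. reflexivity.
  - intros Q q1 q2 Hq.
    destruct (equivalence_full (v' Q ;; q1)) as [r1 Hr1].
    destruct (equivalence_full (v' Q ;; q2)) as [r2 Hr2]. cbn in Hr1, Hr2.
    assert (Er : r1 ;; f = r2 ;; g).
    { apply Faithful. rewrite !(f_cmp _ FF), Hr1, Hr2, !assoc, Hq. reflexivity. }
    destruct (Hp _ _ _ Er) as [w [[Hw1 Hw2] Hwu]].
    assert (Hback : forall X (q : hom Q X), v Q ;; (v' Q ;; q) = q).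
    { intros X q. cbn. rewrite <- assoc, (proj1 (Hvinv Q)), (cat_idl _ HD). reflexivity. }
    exists (v Q ;; fm F w). cbn. split; [split|].
    + rewrite assoc, <- (f_cmp _ FF), Hw1, Hr1. apply Hback.
    + rewrite assoc, <- (f_cmp _ FF), Hw2, Hr2. apply Hback.
    + intros z [Hz1 Hz2].
      destruct (equivalence_full (v' Q ;; z)) as [w' Hw']. cbn in Hw'.
      assert (Ew : w = w').
      { apply Hwu. split; apply Faithful; rewrite (f_cmp _ FF), Hw', assoc;
          [rewrite Hz1, Hr1 | rewrite Hz2, Hr2]; reflexivity. }
      rewrite Ew, Hw'. apply Hback.
Qed.

End Equivalences.

(** * The restriction category R[C] *)

Definition sp_eta {C : LData} {M N : C} (p : Span C M N) : hom (sp_ob p) M :=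
  tr (sp_eq p) (eta (sp_ob p)).

Lemma sp_eta_mkSpan {C : LData} {M N : C} (U : C) (e : Lo U = M) (f : hom U N) :
  sp_eta (mkSpan U e f) = tr e (eta U).
Proof. reflexivity. Qed.

Definition sp_equiv {C : LData} {M N : C} (p q : Span C M N) : Prop :=
  exists (u : hom (sp_ob p) (sp_ob q)) (v : hom (sp_ob q) (sp_ob p)),
    is_inverse u v /\ u ;; sp_eta q = sp_eta p /\ u ;; sp_mor q = sp_mor p.

Lemma sp_isoE {C : LData} {M N : C} (p q : Span C M N) : sp_iso p q <-> sp_equiv p q.
Proof.
  unfold sp_iso, sp_equiv, sp_eta, is_inverse. split.
  - intros [u [v [H1 [H2 [H3 H4]]]]]. exists u, v. repeat split; auto.
    rewrite <- tr_cmp, H3, <- tr_tr. apply tr_Ksym.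
  - intros [u [v [[H1 H2] [H3 H4]]]]. exists u, v. repeat split; auto.
    rewrite <- tr_tr, <- H3, tr_cmp, tr_symK. reflexivity.
Qed.

Lemma mkSpan_ext {C : LData} {M N : C} (U : C) (e e' : Lo U = M) (f f' : hom U N) :
  f = f' -> mkSpan U e f = mkSpan U e' f'.
Proof. intros ->. rewrite (proof_irrelevance _ e e'). reflexivity. Qed.

Lemma cls_rep {C : LData} {M N : C} (x : RHom M N) : cls (rep x) = x.
Proof.
  unfold rep. destruct (constructive_indefinite_description _ (proj2_sig x)) as [p Hp].
  destruct x as [P HP]. cbn in *. subst P. unfold cls. f_equal. apply proof_irrelevance.
Qed.

Section Spans.
Context {C : LData} (HC : isLC C).
Let idl := cat_idl _ (lc_cat _ HC).
Let idr := cat_idr _ (lc_cat _ HC).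
Let assoc := cat_assoc _ (lc_cat _ HC).

Lemma sp_eta_monic {M N : C} (p : Span C M N) : monic (sp_eta p).
Proof. apply monic_tr, (L2 _ HC). Qed.

Lemma sp_equiv_refl {M N : C} (p : Span C M N) : sp_equiv p p.
Proof. exists (idm _), (idm _). repeat split; apply idl. Qed.

Lemma sp_equiv_sym {M N : C} (p q : Span C M N) : sp_equiv p q -> sp_equiv q p.
Proof.
  intros [u [v [[H1 H2] [H3 H4]]]]. exists v, u. repeat split; auto.
  - rewrite <- H3, <- assoc, H2, idl. reflexivity.
  - rewrite <- H4, <- assoc, H2, idl. reflexivity.
Qed.

Lemma sp_equiv_trans {M N : C} (p q r : Span C M N) :
  sp_equiv p q -> sp_equiv q r -> sp_equiv p r.
Proof.
  intros [u [v [[H1 H2] [H3 H4]]]] [u' [v' [[H1' H2'] [H3' H4']]]].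
  exists (u ;; u'), (v' ;; v). repeat split.
  - rewrite assoc, <- (assoc _ _ _ _ u'), H1', idl. auto.
  - rewrite assoc, <- (assoc _ _ _ _ v), H2, idl. auto.
  - rewrite assoc, H3'. auto.
  - rewrite assoc, H4'. auto.
Qed.

Lemma cls_eqP {M N : C} (p q : Span C M N) : cls p = cls q <-> sp_equiv p q.
Proof.
  split.
  - intros H. apply (f_equal (@proj1_sig _ _)) in H. cbn in H.
    apply sp_isoE. rewrite H. apply sp_isoE, sp_equiv_refl.
  - intros H.
    assert (E : sp_iso p = sp_iso q).
    { apply functional_extensionality. intros r. apply propositional_extensionality.
      rewrite !sp_isoE. split; intros H'.
      - apply (sp_equiv_trans _ p); auto. apply sp_equiv_sym; auto.
      - apply (sp_equiv_trans _ q); auto. }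
    unfold cls.
    generalize (ex_intro (fun p0 : Span C M N => sp_iso q = sp_iso p0) q eq_refl).
    generalize (ex_intro (fun p0 : Span C M N => sp_iso p = sp_iso p0) p eq_refl).
    rewrite E. intros. f_equal. apply proof_irrelevance.
Qed.

Lemma sp_equiv_rep_cls {M N : C} (p : Span C M N) : sp_equiv p (rep (cls p)).
Proof. apply cls_eqP. symmetry. apply cls_rep. Qed.

Lemma span_pullback_exists {M N P : C} (p : Span C M N) (q : Span C N P) :
  exists (W : C) (eW : Lo W = M) (m : hom W (sp_ob p)) (k : hom W (sp_ob q)),
    is_pullback m k (sp_mor p) (sp_eta q) /\ m ;; sp_eta p = tr eW (eta W).
Proof.
  destruct (L3 _ HC (sp_ob q) (sp_ob p) (tr (eq_sym (sp_eq q)) (sp_mor p)))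
    as [W [m [k [e [Hpb Hm]]]]].
  exists W, (eq_trans e (sp_eq p)), m, k. split.
  - apply (is_pullback_tr _ _ _ _ (sp_eq q)) in Hpb. rewrite tr_Ksym in Hpb. exact Hpb.
  - unfold sp_eta. rewrite <- tr_tr, <- Hm, tr_cmp. reflexivity.
Qed.

(* Composition depends neither on the chosen representatives nor on the
   chosen pullback. *)
Lemma Rcmp_cls {M N P : C} (p : Span C M N) (q : Span C N P)
  (W : C) (eW : Lo W = M) (m : hom W (sp_ob p)) (k : hom W (sp_ob q)) :
  is_pullback m k (sp_mor p) (sp_eta q) -> m ;; sp_eta p = tr eW (eta W) ->
  Rcmp HC (cls p) (cls q) = cls (mkSpan W eW (k ;; sp_mor q)).
Proof.
  intros Hpb Hm. unfold Rcmp. cbv zeta.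
  destruct (sp_equiv_rep_cls p) as [a [a' [Ha [Ha1 Ha2]]]].
  destruct (sp_equiv_rep_cls q) as [b [b' [Hb [Hb1 Hb2]]]].
  revert a a' Ha Ha1 Ha2 b b' Hb Hb1 Hb2.
  generalize (rep (cls p)) as p'. generalize (rep (cls q)) as q'. intros q' p'.
  intros a a' Ha Ha1 Ha2 b b' Hb Hb1 Hb2.
  destruct (pbc HC (sp_ob q') (sp_ob p') (tr (eq_sym (sp_eq q')) (sp_mor p')))
    as [W' [m' [k' [e [Hpb' Hm']]]]]. cbn.
  apply (is_pullback_tr _ _ _ _ (sp_eq q')) in Hpb'. rewrite tr_Ksym in Hpb'.
  pose proof (is_pullback_iso_cospan (lc_cat _ HC) m k _ _ a a' b b' _ _ Hpb Ha Hb Ha2 Hb1)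
    as Hpb2.
  destruct (pullback_unique_up_to_iso (lc_cat _ HC) _ _ _ _ _ _ Hpb2 Hpb')
    as [u [v [Huv [Hu1 Hu2]]]].
  symmetry. apply cls_eqP. exists u, v. split; [exact Huv|]. cbn. split.
  - unfold sp_eta at 1 2; cbn. rewrite <- tr_tr, <- Hm', tr_cmp. fold (sp_eta p').
    rewrite <- assoc, Hu1, assoc, Ha1. exact Hm.
  - rewrite <- assoc, Hu2, assoc, Hb2. reflexivity.
Qed.

Lemma Rrst_cls {M N : C} (p : Span C M N) :
  Rrst (cls p) = cls (mkSpan (sp_ob p) (sp_eq p) (sp_eta p)).
Proof.
  unfold Rrst. cbv zeta. apply cls_eqP.
  destruct (sp_equiv_sym _ _ (sp_equiv_rep_cls p)) as [u [v [Huv [H1 H2]]]].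
  exists u, v. split; auto.
Qed.

Lemma Rcmp_total_r {M N P : C} (p : Span C M N) (e : Lo N = N) (g : hom N P) :
  tr e (eta N) = idm N ->
  Rcmp HC (cls p) (cls (mkSpan N e g)) = cls (mkSpan (sp_ob p) (sp_eq p) (sp_mor p ;; g)).
Proof.
  intros He.
  rewrite (Rcmp_cls p (mkSpan N e g) (sp_ob p) (sp_eq p) (idm _) (sp_mor p ;; idm _)).
  - cbn. rewrite idr. reflexivity.
  - apply is_pullback_iso; [exact (lc_cat _ HC)|]. cbn. unfold sp_eta. cbn. rewrite He.
    split; apply idl.
  - rewrite idl. reflexivity.
Qed.

Lemma Rcmp_Ridm_l (M : TObj C) {N : C} (q : Span C (to_ob M) N) :
  Rcmp HC (Ridm M) (cls q) = cls q.
Proof.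
  unfold Ridm.
  rewrite (Rcmp_cls (mkSpan (to_ob M) (to_eq M) (idm _)) q (sp_ob q) (sp_eq q) (sp_eta q) (idm _)).
  - rewrite idl. destruct q. reflexivity.
  - apply is_pullback_idm, (lc_cat _ HC).
  - unfold sp_eta at 2. cbn. rewrite (to_eta M), idr. reflexivity.
Qed.

Lemma Rcmp_Ridm_r {M : C} (N : TObj C) (p : Span C M (to_ob N)) :
  Rcmp HC (cls p) (Ridm N) = cls p.
Proof.
  unfold Ridm. rewrite Rcmp_total_r by apply (to_eta N). rewrite idr. destruct p. reflexivity.
Qed.

Lemma Rcmp_assoc {M N P Q : C} (p : Span C M N) (q : Span C N P) (r : Span C P Q) :
  Rcmp HC (Rcmp HC (cls p) (cls q)) (cls r) = Rcmp HC (cls p) (Rcmp HC (cls q) (cls r)).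
Proof.
  destruct (span_pullback_exists p q) as [W1 [e1 [m1 [k1 [H1 H1']]]]].
  rewrite (Rcmp_cls p q W1 e1 m1 k1 H1 H1').
  set (s1 := mkSpan W1 e1 (k1 ;; sp_mor q)).
  destruct (span_pullback_exists s1 r) as [W2 [e2 [m2 [k2 [H2 H2']]]]].
  rewrite (Rcmp_cls s1 r W2 e2 m2 k2 H2 H2').
  destruct (span_pullback_exists q r) as [W3 [e3 [m3 [k3 [H3 H3']]]]].
  rewrite (Rcmp_cls q r W3 e3 m3 k3 H3 H3').
  set (s3 := mkSpan W3 e3 (k3 ;; sp_mor r)).
  assert (Hc : (m2 ;; k1) ;; sp_mor q = k2 ;; sp_eta r) by (rewrite assoc; apply H2).
  destruct (proj2 H3 _ _ _ Hc) as [u [[Hu1 Hu2] _]].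
  rewrite (Rcmp_cls p s3 W2 e2 (m2 ;; m1) u).
  - apply f_equal, mkSpan_ext. cbn. rewrite <- assoc, Hu2. reflexivity.
  - unfold s3. rewrite sp_eta_mkSpan, <- H3'.
    exact (is_pullback_paste (lc_cat _ HC) _ _ _ _ m1 k1 m3 k3 m2 k2 u H1 H3 H2 Hu1 Hu2).
  - rewrite assoc, <- H2'. f_equal. exact H1'.
Qed.

End Spans.

Section RestrictionStructure.
Context {C : LData} (HC : isLC C).
Let idl := cat_idl _ (lc_cat _ HC).

Lemma RD_isCat : isCat (RD C HC).
Proof.
  split; cbn.
  - intros A B f. rewrite <- (cls_rep f). apply Rcmp_Ridm_l.
  - intros A B f. rewrite <- (cls_rep f). apply Rcmp_Ridm_r.
  - intros A B C' D f g h. rewrite <- (cls_rep f), <- (cls_rep g), <- (cls_rep h).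
    apply Rcmp_assoc.
Qed.

Lemma Rcmp_Rrst_cls {M N P : C} (p : Span C M N) (q : Span C N P) (W : C) (eW : Lo W = M)
  (m : hom W (sp_ob p)) (k : hom W (sp_ob q)) :
  is_pullback m k (sp_mor p) (sp_eta q) -> m ;; sp_eta p = tr eW (eta W) ->
  Rcmp HC (cls p) (Rrst (cls q)) = cls (mkSpan W eW (k ;; sp_eta q)).
Proof.
  intros H H'. rewrite (Rrst_cls HC).
  exact (Rcmp_cls HC p (mkSpan (sp_ob q) (sp_eq q) (sp_eta q)) W eW m k H H').
Qed.

Lemma Rcmp_Rrst_l {M N : C} (p : Span C M N) : Rcmp HC (Rrst (cls p)) (cls p) = cls p.
Proof.
  rewrite (Rrst_cls HC).
  rewrite (Rcmp_cls HC (mkSpan (sp_ob p) (sp_eq p) (sp_eta p)) p (sp_ob p) (sp_eq p)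
             (idm _) (idm _)).
  - rewrite idl. destruct p. reflexivity.
  - apply is_pullback_monic_idm; [exact (lc_cat _ HC) | apply sp_eta_monic, HC].
  - rewrite idl. reflexivity.
Qed.

Lemma Rrst_Rcmp_comm {M N P : C} (p : Span C M N) (q : Span C M P) :
  Rcmp HC (Rrst (cls p)) (Rrst (cls q)) = Rcmp HC (Rrst (cls q)) (Rrst (cls p)).
Proof.
  rewrite !(Rrst_cls HC (M := M)).
  set (p' := mkSpan (sp_ob p) (sp_eq p) (sp_eta p)).
  set (q' := mkSpan (sp_ob q) (sp_eq q) (sp_eta q)).
  destruct (span_pullback_exists HC p' q') as [W [e [m [k [H H']]]]].
  rewrite (Rcmp_cls HC p' q' W e m k H H'), (Rcmp_cls HC q' p' W e k m).
  - apply f_equal, mkSpan_ext. symmetry. apply H.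
  - apply is_pullback_sym, H.
  - rewrite <- H'. symmetry. apply H.
Qed.

Lemma Rrst_Rcmp_Rrst {M N P : C} (p : Span C M N) (q : Span C M P) :
  Rcmp HC (Rrst (cls q)) (Rrst (cls p)) = Rrst (Rcmp HC (Rrst (cls q)) (cls p)).
Proof.
  rewrite (Rrst_cls HC q).
  set (q' := mkSpan (sp_ob q) (sp_eq q) (sp_eta q)).
  destruct (span_pullback_exists HC q' p) as [W [e [m [k [H H']]]]].
  rewrite (Rcmp_Rrst_cls q' p W e m k H H'), (Rcmp_cls HC q' p W e m k H H'), (Rrst_cls HC).
  apply f_equal, mkSpan_ext. cbn. rewrite sp_eta_mkSpan, <- H'. symmetry. apply H.
Qed.

Lemma Rcmp_Rrst_r {M N P : C} (p : Span C M N) (q : Span C N P) :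
  Rcmp HC (cls p) (Rrst (cls q)) = Rcmp HC (Rrst (Rcmp HC (cls p) (cls q))) (cls p).
Proof.
  destruct (span_pullback_exists HC p q) as [W [e [m [k [H H']]]]].
  rewrite (Rcmp_Rrst_cls p q W e m k H H'), (Rcmp_cls HC p q W e m k H H'), (Rrst_cls HC).
  cbn [sp_ob sp_eq].
  set (w := mkSpan W e (sp_eta (mkSpan W e (k ;; sp_mor q)))).
  rewrite (Rcmp_cls HC w p W e (idm _) m).
  - apply f_equal, mkSpan_ext. symmetry. apply H.
  - cbn. rewrite sp_eta_mkSpan, <- H'.
    apply is_pullback_monic; [exact (lc_cat _ HC) | apply sp_eta_monic, HC].
  - rewrite idl. reflexivity.
Qed.

Lemma RD_isRC : isRC (RD C HC).
Proof.
  split; cbn.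
  - exact RD_isCat.
  - intros A B f. rewrite <- (cls_rep f). apply Rcmp_Rrst_l.
  - intros A B C' f g. rewrite <- (cls_rep f), <- (cls_rep g). apply Rrst_Rcmp_comm.
  - intros A B C' f g. rewrite <- (cls_rep f), <- (cls_rep g). apply Rrst_Rcmp_Rrst.
  - intros A B C' f g. rewrite <- (cls_rep f), <- (cls_rep g). apply Rcmp_Rrst_r.
Qed.

End RestrictionStructure.

Section RFunctor.
Context {C D : LData} (HC : isLC C) (HD : isLC D).
Context {F : FData C D} (HF : isLFunctor F).
Let FF := lf_fun _ HF.

Lemma fm_sp_eta {M N : C} (p : Span C M N) : fm F (sp_eta p) = sp_eta (RF_span HF p).
Proof.
  unfold sp_eta. cbn. rewrite fm_tr, <- (lf_eta _ HF (sp_ob p)), !tr_tr. apply tr_irrelevance.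
Qed.

Lemma RF_span_equiv {M N : C} (p q : Span C M N) :
  sp_equiv p q -> sp_equiv (RF_span HF p) (RF_span HF q).
Proof.
  intros [u [v [[H1 H2] [H3 H4]]]]. exists (fm F u), (fm F v).
  unfold is_inverse. rewrite <- !fm_sp_eta. cbn.
  rewrite <- !(f_cmp _ FF), H1, H2, H3, H4, !(f_id _ FF).
  repeat split.
Qed.

Lemma RF_cls {M N : TObj C} (p : Span C (to_ob M) (to_ob N)) :
  fm (RF HC HD HF) (A := M) (B := N) (cls p) = cls (RF_span HF p).
Proof.
  apply (cls_eqP HD), RF_span_equiv, (sp_equiv_sym HC), (sp_equiv_rep_cls HC).
Qed.

Lemma lf_pb_span {M N P : C} (p : Span C M N) (q : Span C N P) (W : C)
  (m : hom W (sp_ob p)) (k : hom W (sp_ob q)) :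
  is_pullback m k (sp_mor p) (sp_eta q) ->
  is_pullback (fm F m) (fm F k) (fm F (sp_mor p)) (fm F (sp_eta q)).
Proof. destruct q as [V e g]. unfold sp_eta. cbn. destruct e. apply (lf_pb _ HF). Qed.

Lemma RF_isRFunctor : isRFunctor (RF HC HD HF).
Proof.
  split; [split|].
  - intros A. change (fm (RF HC HD HF) (Ridm A) = Ridm (RF_ob HF A)).
    unfold Ridm. rewrite RF_cls.
    apply f_equal, mkSpan_ext, (f_id _ FF).
  - intros A B E x y. cbn. rewrite <- (cls_rep x), <- (cls_rep y).
    generalize (rep x) (rep y). clear x y. intros p q.
    destruct (span_pullback_exists HC p q) as [W [e [m [k [H H']]]]].
    change (fm (RF HC HD HF) (Rcmp HC (cls p) (cls q))
            = Rcmp HD (fm (RF HC HD HF) (A := A) (B := B) (cls p))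
                      (fm (RF HC HD HF) (A := B) (B := E) (cls q))).
    rewrite (Rcmp_cls HC p q W e m k H H'), !RF_cls.
    set (s := RF_span HF (mkSpan W e (k ;; sp_mor q))).
    assert (Hpb : is_pullback (fm F m) (fm F k) (sp_mor (RF_span HF p)) (sp_eta (RF_span HF q)))
      by (rewrite <- fm_sp_eta; exact (lf_pb_span p q W m k H)).
    assert (Hm : fm F m ;; sp_eta (RF_span HF p) = tr (sp_eq s) (eta (F W))).
    { rewrite <- fm_sp_eta, <- (f_cmp _ FF), H'. exact (fm_sp_eta (mkSpan W e (k ;; sp_mor q))). }
    symmetry. etransitivity;
      [exact (Rcmp_cls HD (RF_span HF p) (RF_span HF q) (F W) (sp_eq s) (fm F m) (fm F k) Hpb Hm)|].
    apply f_equal, mkSpan_ext. symmetry. apply (f_cmp _ FF).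
  - intros A B x. rewrite <- (cls_rep x). generalize (rep x). clear x. intros p.
    change (fm (RF HC HD HF) (A := A) (B := A) (Rrst (cls p)) =
            Rrst (fm (RF HC HD HF) (A := A) (B := B) (cls p))).
    rewrite (Rrst_cls HC), (RF_cls (M := A) (N := A)), (RF_cls (M := A) (N := B)), (Rrst_cls HD).
    apply f_equal. unfold RF_span. cbn [sp_ob sp_eq sp_mor]. apply mkSpan_ext, fm_sp_eta.
Qed.

End RFunctor.

Section RTransformation.
Context {C D : LData} (HC : isLC C) (HD : isLC D).
Context {F G : FData C D} (HF : isLFunctor F) (HG : isLFunctor G) (a : NT F G).
Let idl := cat_idl _ (lc_cat _ HD).
Let idr := cat_idr _ (lc_cat _ HD).

Lemma RN_cls {M N : TObj C} (p : Span C (to_ob M) (to_ob N)) :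
  Rcmp HD (fm (RF HC HD HF) (A := M) (B := N) (cls p)) (RN HC HD HF HG a N)
  = cls (mkSpan (F (sp_ob p)) (sp_eq (RF_span HF p)) (fm F (sp_mor p) ;; a (to_ob N))).
Proof. rewrite (RF_cls HC HD HF). exact (Rcmp_total_r HD _ _ _ (RF_eta HF N)). Qed.

Lemma RN_isRNT : isLNT a -> isRNT (RN HC HD HF HG a).
Proof.
  intros Ha. split.
  - intros M. change (Rrst (RN HC HD HF HG a M) = Ridm (RF_ob HF M)).
    unfold RN, Ridm. rewrite (Rrst_cls HD). apply f_equal, mkSpan_ext, (RF_eta HF M).
  - intros M N x. rewrite <- (cls_rep x). generalize (rep x). clear x. intros p.
    change (Rcmp HD (fm (RF HC HD HF) (A := M) (B := N) (cls p)) (RN HC HD HF HG a N) =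
            Rcmp HD (Rcmp HD (fm (RF HC HD HF) (A := M) (B := M) (Rrst (cls p)))
                               (RN HC HD HF HG a M))
                     (fm (RF HC HD HG) (A := M) (B := N) (cls p))).
    rewrite (Rrst_cls HC), !RN_cls, (RF_cls HC HD HG). cbn [sp_ob sp_mor].
    (* By naturality [F eta ; a] is [a ; G eta], with [G eta] monic. *)
    assert (Hpb : is_pullback (idm _) (a (sp_ob p)) (fm F (sp_eta p) ;; a (to_ob M))
                    (sp_eta (RF_span HG p))).
    { rewrite <- (fm_sp_eta HG), (Ha _ _ (sp_eta p)).
      apply is_pullback_monic; [exact (lc_cat _ HD)|].
      rewrite (fm_sp_eta HG). exact (sp_eta_monic HD (RF_span HG p)). }
    set (s := mkSpan (F (sp_ob p)) (sp_eq (RF_span HF p)) (fm F (sp_eta p) ;; a (to_ob M))).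
    assert (Hm : idm _ ;; sp_eta s = tr (sp_eq (RF_span HF p)) (eta (F (sp_ob p))))
      by apply idl.
    symmetry. etransitivity;
      [exact (Rcmp_cls HD s (RF_span HG p) _ _ (idm _) (a (sp_ob p)) Hpb Hm)|].
    apply f_equal, mkSpan_ext. cbn. symmetry. apply Ha.
Qed.

Lemma RN_isRTotNT : isLTotNT a -> isRTotNT (RN HC HD HF HG a).
Proof.
  intros Ha. split; [apply RN_isRNT, Ha|].
  intros M N x. rewrite <- (cls_rep x). generalize (rep x). clear x. intros p.
  change (Rcmp HD (fm (RF HC HD HF) (A := M) (B := N) (cls p)) (RN HC HD HF HG a N) =
          Rcmp HD (RN HC HD HF HG a M) (fm (RF HC HD HG) (A := M) (B := N) (cls p))).
  rewrite RN_cls, (RF_cls HC HD HG). unfold RN.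
  set (s := mkSpan (F (to_ob M)) (RF_eq HF M) (a (to_ob M))).
  assert (Hpb : is_pullback (fm F (sp_eta p)) (a (sp_ob p)) (sp_mor s) (sp_eta (RF_span HG p))).
  { rewrite <- (fm_sp_eta HG). cbn. unfold sp_eta. destruct p as [U e f]. cbn. destruct e.
    apply is_pullback_sym, (proj2 Ha). }
  assert (Hm : fm F (sp_eta p) ;; sp_eta s = tr (sp_eq (RF_span HF p)) (eta (F (sp_ob p)))).
  { unfold s. rewrite sp_eta_mkSpan, (RF_eta HF M), idr. apply (fm_sp_eta HF). }
  etransitivity; [|symmetry; exact (Rcmp_cls HD s (RF_span HG p) _ _ _ _ Hpb Hm)].
  apply f_equal, mkSpan_ext, (proj1 Ha).
Qed.

End RTransformation.

(** * The local category L[X] *)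

Section RestrictionFacts.
Context {X : RData} (HX : isRC X).

Lemma rst_rst {A B : X} (f : hom A B) : rst (rst f) = rst f.
Proof.
  pose proof (R3 _ HX _ _ _ (idm A) f) as H.
  rewrite (rst_id HX), !(cat_idr _ (rc_cat _ HX)) in H. symmetry. exact H.
Qed.

Lemma rst_cmp_le {A B C : X} (f : hom A B) (g : hom B C) : rst (f ;; g) ;; rst f = rst (f ;; g).
Proof. rewrite (R3 _ HX), <- (R4 _ HX). apply (rst_cmp_rst HX). Qed.

Lemma rst_cmp_total {A B C : X} (f : hom A B) (g : hom B C) :
  rtotal g -> rst (f ;; g) = rst f.
Proof. intros H. rewrite <- (rst_cmp_rst HX), H, (cat_idr _ (rc_cat _ HX)). reflexivity. Qed.

End RestrictionFacts.

Lemma LHom_ext {X : RData} {x y : LObj X} (f g : LHom X x y) : lh f = lh g -> f = g.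
Proof.
  destruct f as [f1 f2 f3], g as [g1 g2 g3]. cbn. intros <-.
  rewrite (proof_irrelevance _ f2 g2), (proof_irrelevance _ f3 g3). reflexivity.
Qed.

Lemma LObj_ext {X : RData} (A : X) (a b : hom A A) (ha : rst a = a) (hb : rst b = b) :
  a = b -> mkLObj A a ha = mkLObj A b hb.
Proof. intros <-. rewrite (proof_irrelevance _ ha hb). reflexivity. Qed.

Lemma LObj_JMeq {X : RData} (A B : X) (e : A = B) (a : hom A A) (b : hom B B)
  (ha : rst a = a) (hb : rst b = b) : JMeq a b -> mkLObj A a ha = mkLObj B b hb.
Proof. subst B. intros H. apply LObj_ext, JMeq_eq, H. Qed.

Lemma LObj_inj {X : RData} (A : X) (a b : hom A A) (ha : rst a = a) (hb : rst b = b) :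
  mkLObj A a ha = mkLObj A b hb -> a = b.
Proof.
  intros H.
  apply (f_equal (fun x : LObj X => existT (fun B : X => hom B B) (lo_ob x) (lo_id x))) in H.
  exact (Eqdep.EqdepTheory.inj_pair2 _ _ _ _ _ H).
Qed.

Lemma LHom_JMeq {X : RData} {x x' y y' : LObj X} (f : LHom X x y) (g : LHom X x' y') :
  x = x' -> y = y' -> JMeq (lh f) (lh g) -> JMeq f g.
Proof. intros <- <- H. apply JMeq_eq, LHom_ext in H. subst. reflexivity. Qed.

Section LocalStructure.
Context {X : RData} (HX : isRC X).
Let assoc := cat_assoc _ (rc_cat _ HX).
Let R1 := R1 _ HX.
Let R4 := R4 _ HX.

Lemma LD_isCat : isCat (LCat X HX).
Proof.
  split.
  - intros A B f. apply LHom_ext. cbn. rewrite <- (lh_r f). apply R1.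
  - intros A B f. apply LHom_ext, (lh_c f).
  - intros A B C' D f g h. apply LHom_ext, assoc.
Qed.

(* Unlike the universal property, this criterion (a partial inverse of the left
   leg) is visibly preserved by restriction functors. *)
Lemma L_is_pullback_partial_inverse {N M T P : LObj X} (f : LHom X N T) (e : LHom X M T)
  (e' : hom (lo_ob T) (lo_ob M)) (p1 : LHom X P N) (p2 : LHom X P M)
  (v : hom (lo_ob N) (lo_ob P)) :
  lh e ;; e' = lo_id M -> lh p1 ;; lh f = lh p2 ;; lh e ->
  rst v = rst (lh f ;; e') -> v ;; lh p1 = rst (lh f ;; e') ->
  lh p1 ;; v = lo_id P -> v ;; lh p2 = lh f ;; e' ->
  @is_pullback (LCat X HX) _ _ _ _ p1 p2 f e.
Proof.
  intros He Hc Hrv Hv1 Hv2 Hv3. split.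
  - apply LHom_ext, Hc.
  - intros Q q1 q2 Hq. apply (f_equal lh) in Hq. cbn in Hq.
    assert (Hq1 : lh q1 ;; rst (lh f ;; e') = lh q1).
    { rewrite R4, <- assoc, Hq, assoc, He, (lh_c q2), (lh_r q2), <- (lh_r q1). apply R1. }
    assert (Hr : rst (lh q1 ;; v) = lo_id Q).
    { rewrite <- (rst_cmp_rst HX), Hrv, (rst_cmp_rst HX), <- (rst_cmp_rst HX), Hq1.
      apply (lh_r q1). }
    assert (Hw : (lh q1 ;; v) ;; lo_id P = lh q1 ;; v).
    { rewrite <- Hv2, <- assoc, (assoc _ _ _ _ (lh q1) v), Hv1, Hq1. reflexivity. }
    exists (mkLHom (x := Q) (y := P) (lh q1 ;; v) Hr Hw). split; [split|]; cbn.
    + apply LHom_ext. cbn. rewrite assoc, Hv1. exact Hq1.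
    + apply LHom_ext. cbn. rewrite assoc, Hv3, <- assoc, Hq, assoc, He. apply (lh_c q2).
    + intros w [Hw1 _]. apply LHom_ext. apply (f_equal lh) in Hw1. cbn in Hw1 |- *.
      rewrite <- Hw1, assoc, Hv2. apply (lh_c w).
Qed.

Definition eta_pb_ob {N M : LObj X} (f : LHom X N (Lo_L HX M)) : LObj X :=
  mkLObj (lo_ob N) (rst (lh f ;; lo_id M)) (rst_rst HX _).

Lemma eta_pb_l_c {N M : LObj X} (f : LHom X N (Lo_L HX M)) :
  rst (lh f ;; lo_id M) ;; lo_id N = rst (lh f ;; lo_id M).
Proof. cbn. rewrite <- (lh_r f). apply (rst_cmp_le HX). Qed.

Lemma eta_pb_r_c {N M : LObj X} (f : LHom X N (Lo_L HX M)) :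
  (lh f ;; lo_id M) ;; lo_id M = lh f ;; lo_id M.
Proof. cbn. rewrite assoc, (ridem HX _ (lo_ok M)). reflexivity. Qed.

Definition eta_pb_l {N M : LObj X} (f : LHom X N (Lo_L HX M)) : LHom X (eta_pb_ob f) N :=
  mkLHom (x := eta_pb_ob f) (rst (lh f ;; lo_id M)) (rst_rst HX _) (eta_pb_l_c f).

Definition eta_pb_r {N M : LObj X} (f : LHom X N (Lo_L HX M)) : LHom X (eta_pb_ob f) M :=
  mkLHom (x := eta_pb_ob f) (lh f ;; lo_id M) eq_refl (eta_pb_r_c f).

Lemma eta_pb_is_pullback {N M : LObj X} (f : LHom X N (Lo_L HX M)) :
  @is_pullback (LCat X HX) _ _ _ _ (eta_pb_l f) (eta_pb_r f) f (eta_L HX M).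
Proof.
  apply (L_is_pullback_partial_inverse f (eta_L HX M) (lo_id M) (eta_pb_l f) (eta_pb_r f)
           (rst (lh f ;; lo_id M))); cbn.
  - apply (ridem HX), (lo_ok M).
  - rewrite <- R4, (lo_ok M), assoc, (ridem HX _ (lo_ok M)). reflexivity.
  - apply (rst_rst HX).
  - apply (ridem HX), (rst_rst HX).
  - apply (ridem HX), (rst_rst HX).
  - apply R1.
Qed.

Lemma L_pullback_eta_partial_inverse {N M P : LObj X} (f : LHom X N (Lo_L HX M))
  (p1 : LHom X P N) (p2 : LHom X P M) :
  @is_pullback (LCat X HX) _ _ _ _ p1 p2 f (eta_L HX M) ->
  exists v : hom (lo_ob N) (lo_ob P),
    rst v = rst (lh f ;; lo_id M) /\ v ;; lh p1 = rst (lh f ;; lo_id M) /\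
    lh p1 ;; v = lo_id P /\ v ;; lh p2 = lh f ;; lo_id M.
Proof.
  intros Hpb.
  destruct (pullback_unique_up_to_iso LD_isCat _ _ _ _ _ _ Hpb (eta_pb_is_pullback f))
    as [u [v [[Huv Hvu] [Hu1 Hu2]]]].
  apply (f_equal lh) in Huv, Hvu, Hu1, Hu2. cbn in Huv, Hvu, Hu1, Hu2.
  pose proof (lh_c u) as Cu. cbn in Cu. rewrite Cu in Hu1. rewrite <- Hu1, <- Hu2.
  exists (lh v). repeat split.
  - apply (lh_r v).
  - exact Hvu.
  - exact Huv.
  - rewrite <- assoc, Hvu. apply R1.
Qed.

End LocalStructure.

Lemma LHom_tr {X : RData} (HX : isRC X) {x y y' : LObj X} (e : y = y')
  (h : LHom X x y) (h' : LHom X x y') :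
  JMeq (lh h) (lh h') -> @tr (LCat X HX) x y y' e h = h'.
Proof. destruct e. intros H. apply LHom_ext, JMeq_eq, H. Qed.

Lemma LD_isLC {X : RData} (HX : isRC X) : isLC (LD X HX).
Proof.
  refine (Build_isLC (LD X HX) (LD_isCat HX) (fun M => eq_refl) _ _ _).
  - intros M. apply LHom_ext. reflexivity.
  - intros M Z g h H. apply (f_equal lh) in H. cbn in H. apply LHom_ext.
    rewrite (lh_c g), (lh_c h) in H. exact H.
  - intros M N f.
    exists (eta_pb_ob HX (N := N) (M := M) f), (eta_pb_l HX f), (eta_pb_r HX f), eq_refl.
    split.
    + apply eta_pb_is_pullback.
    + apply LHom_ext. cbn. apply eta_pb_l_c.
Qed.

Section LFunctor.
Context {X Y : RData} (HX : isRC X) (HY : isRC Y).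
Context {F : FData X Y} (HF : isRFunctor F).
Let FF := proj1 HF.
Let F_rst := proj2 HF.

Lemma LF_isLFunctor : isLFunctor (LF HX HY HF).
Proof.
  assert (Hobj : forall M : LD X HX, LF HX HY HF (Lo M) = Lo (LF HX HY HF M))
    by (intros M; apply LObj_ext, (f_id _ FF)).
  refine (Build_isLFunctor _ _ _ _ Hobj _ _).
  - split.
    + intros A. apply LHom_ext. reflexivity.
    + intros A B E f g. apply LHom_ext, (f_cmp _ FF).
  - intros M. apply LHom_tr. reflexivity.
  - intros M N P f p1 p2 Hpb.
    destruct (L_pullback_eta_partial_inverse HX f p1 p2 Hpb) as [v [Hv0 [Hv1 [Hv2 Hv3]]]].
    pose proof (f_equal lh (proj1 Hpb)) as Hc. cbn in Hc.
    apply (L_is_pullback_partial_inverse HY (fm (LF HX HY HF) f)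
             (fm (LF HX HY HF) (eta_L HX N)) (fm F (lo_id N))
             (fm (LF HX HY HF) p1) (fm (LF HX HY HF) p2) (fm F v)); cbn;
      rewrite <- ?(f_cmp _ FF), <- ?F_rst, <- ?(f_cmp _ FF).
    + rewrite (ridem HX _ (lo_ok N)). reflexivity.
    + rewrite Hc. reflexivity.
    + rewrite Hv0. reflexivity.
    + rewrite Hv1. reflexivity.
    + rewrite Hv2. reflexivity.
    + rewrite Hv3. reflexivity.
Qed.

End LFunctor.

Section LTransformation.
Context {X Y : RData} (HX : isRC X) (HY : isRC Y).
Context {F G : FData X Y} (HF : isRFunctor F) (HG : isRFunctor G).
Context {a : NT F G} (Ha : isRNT a).
Let idl := cat_idl _ (rc_cat _ HY).
Let assoc := cat_assoc _ (rc_cat _ HY).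

Lemma LN_isLNT : isLNT (LN HX HY HF HG Ha).
Proof.
  intros x y f. apply LHom_ext. cbn.
  rewrite <- assoc, <- (f_cmp _ (proj1 HF)), (lh_c f), (proj2 Ha), (lh_r f). reflexivity.
Qed.

Lemma LN_isLTotNT : isNat a -> isLTotNT (LN HX HY HF HG Ha).
Proof.
  intros Hnat. split; [apply LN_isLNT|].
  intros [A a0 ha]. apply is_pullback_sym.
  assert (Fa0 : rst (fm F a0) = fm F a0) by (rewrite <- (proj2 HF), ha; reflexivity).
  assert (Ga0 : rst (fm G a0) = fm G a0) by (rewrite <- (proj2 HG), ha; reflexivity).
  (* The partial inverse of [F a0] is [F a0] itself: as [a] is total and
     natural, [F a0] is the domain of [a A ; G a0]. *)
  assert (Hdom : rst (a A ;; fm G a0) = fm F a0).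
  { rewrite <- Hnat, (rst_cmp_total HY _ _ (proj1 Ha A)). exact Fa0. }
  apply (L_is_pullback_partial_inverse HY _ (fm (LF HX HY HG) (eta_L HX (mkLObj A a0 ha)))
           (fm G a0) (fm (LF HX HY HF) (eta_L HX (mkLObj A a0 ha))) _ (fm F a0)); cbn;
    rewrite ?(f_id _ (proj1 HF)), ?idl, ?Hdom, ?Fa0, ?(ridem HY _ Fa0).
  - apply (ridem HY _ Ga0).
  - symmetry. exact (LN_c Ha (mkLObj A a0 ha)).
  - reflexivity.
  - reflexivity.
  - reflexivity.
  - rewrite <- Hnat, <- assoc, (ridem HY _ Fa0). reflexivity.
Qed.

End LTransformation.

(** * X is isomorphic to R[L[X]] *)

Lemma TObj_ext {C : LData} (M N : TObj C) : to_ob M = to_ob N -> M = N.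
Proof.
  destruct M as [M e h], N as [N e' h']. cbn. intros <-.
  destruct (proof_irrelevance _ e e'). rewrite (proof_irrelevance _ h h'). reflexivity.
Qed.

Lemma cls_JMeq {C : LData} {M M' N N' : C} (p : Span C M N) (q : Span C M' N') :
  M = M' -> N = N' -> sp_ob p = sp_ob q -> JMeq (sp_mor p) (sp_mor q) -> JMeq (cls p) (cls q).
Proof.
  destruct p as [U e f], q as [V e' g]. cbn. intros <- <- <- H.
  apply JMeq_eq in H. subst g. rewrite (proof_irrelevance _ e e'). reflexivity.
Qed.

Section UnitRL.
Context {X : RData} (HX : isRC X).
Let idr := cat_idr _ (rc_cat _ HX).
Let assoc := cat_assoc _ (rc_cat _ HX).

Lemma LD_span_ext {M N : LObj X} (A : X) (a b : hom A A) (ha : rst a = a) (hb : rst b = b)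
  (E : Lo_L HX (mkLObj A a ha) = M) (E' : Lo_L HX (mkLObj A b hb) = M)
  (f : LHom X (mkLObj A a ha) N) (g : LHom X (mkLObj A b hb) N) :
  a = b -> lh f = lh g ->
  @mkSpan (LD X HX) M N (mkLObj A a ha) E f = @mkSpan (LD X HX) M N (mkLObj A b hb) E' g.
Proof.
  intros <- H. destruct (proof_irrelevance _ ha hb).
  rewrite (proof_irrelevance _ E E'). apply LHom_ext in H. subst. reflexivity.
Qed.

Lemma toRL_ob_eta (A : X) :
  let x := mkLObj A (idm A) (rst_id HX A) in
  @tr (LD X HX) x x x eq_refl (@eta (LD X HX) x) = @idm (LD X HX) x.
Proof. apply LHom_ext. reflexivity. Qed.

Definition toRL_ob (A : X) : TObj (LD X HX) :=
  mkTObj (C := LD X HX) (mkLObj A (idm A) (rst_id HX A)) eq_refl (toRL_ob_eta A).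

Definition toRL_span {A B : X} (f : hom A B)
  : Span (LD X HX) (to_ob (toRL_ob A)) (to_ob (toRL_ob B)) :=
  mkSpan (C := LD X HX) (mkLObj A (rst f) (rst_rst HX f)) eq_refl
    (mkLHom (x := mkLObj A (rst f) (rst_rst HX f)) (y := to_ob (toRL_ob B)) f eq_refl (idr _ _ f)).

Definition toRL_hom {A B : X} (f : hom A B)
  : @hom (RD (LD X HX) (LD_isLC HX)) (toRL_ob A) (toRL_ob B) := cls (toRL_span f).

Definition toRL : FData X (RD (LD X HX) (LD_isLC HX)) :=
  mkF (D := RD (LD X HX) (LD_isLC HX)) toRL_ob (fun A B f => toRL_hom f).

Lemma toRL_hom_idm (A : X) : toRL_hom (idm A) = Ridm (toRL_ob A).
Proof. unfold toRL_hom, Ridm. apply f_equal, LD_span_ext; [apply (rst_id HX) | reflexivity]. Qed.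

Lemma toRL_hom_cmp {A B C : X} (f : hom A B) (g : hom B C) :
  toRL_hom (f ;; g) = Rcmp (LD_isLC HX) (toRL_hom f) (toRL_hom g).
Proof.
  unfold toRL_hom. set (p := toRL_span f). set (q := toRL_span g).
  assert (Hm : @cmp (LCat X HX) _ _ _ (eta_pb_l HX (M := sp_ob q) (sp_mor p)) (sp_eta p)
               = @tr (LCat X HX) _ _ _ eq_refl (eta_L HX (eta_pb_ob HX (M := sp_ob q) (sp_mor p)))).
  { apply LHom_ext. apply (rst_cmp_le HX). }
  rewrite (Rcmp_cls (LD_isLC HX) p q (eta_pb_ob HX (M := sp_ob q) (sp_mor p)) eq_refl _ _
             (eta_pb_is_pullback HX (M := sp_ob q) (sp_mor p)) Hm).
  apply f_equal, LD_span_ext; cbn.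
  - symmetry. apply (rst_cmp_rst HX).
  - rewrite assoc, (R1 _ HX). reflexivity.
Qed.

Lemma toRL_hom_rst {A B : X} (f : hom A B) : toRL_hom (rst f) = Rrst (toRL_hom f).
Proof.
  unfold toRL_hom. rewrite (Rrst_cls (LD_isLC HX)).
  apply f_equal, LD_span_ext; [apply (rst_rst HX) | reflexivity].
Qed.

Lemma toRL_isRFunctor : isRFunctor toRL.
Proof.
  split; [split|]; cbn.
  - exact toRL_hom_idm.
  - intros A B C f g. apply toRL_hom_cmp.
  - intros A B f. apply toRL_hom_rst.
Qed.

Lemma TObj_LD_toRL (M : TObj (LD X HX)) : exists A, M = toRL_ob A.
Proof.
  destruct M as [[A a ha] e he]. exists A. apply TObj_ext. cbn.
  apply LObj_ext. symmetry. exact (LObj_inj A (idm A) a (rst_id HX A) ha e).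
Qed.

Lemma RHom_LD_toRL {A B : X}
  (x : RHom (C := LD X HX) (to_ob (toRL_ob A)) (to_ob (toRL_ob B))) :
  exists f : hom A B, x = toRL_hom f.
Proof.
  rewrite <- (cls_rep x). destruct (rep x) as [[A' a ha] e f].
  pose proof (f_equal (@lo_ob X) e) as EA. cbn in EA. subst A'.
  exists (lh f). unfold toRL_hom.
  apply f_equal, LD_span_ext; [symmetry; exact (lh_r f) | reflexivity].
Qed.

Definition ofRL_span {M N : LObj X} (p : Span (LD X HX) M N) : hom (lo_ob M) (lo_ob N) :=
  eq_rect (lo_ob (sp_ob p)) (fun Z => hom Z (lo_ob N)) (lh (sp_mor p)) (lo_ob M)
    (f_equal (@lo_ob X) (sp_eq p)).

Definition ofRL_hom {M N : LObj X} (x : RHom (C := LD X HX) M N) : hom (lo_ob M) (lo_ob N) :=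
  ofRL_span (rep x).

(* Equivalent spans have the same domain idempotent, because commuting
   restriction idempotents that factor through each other are equal. *)
Lemma ofRL_span_equiv {A B : X} (p q : Span (LD X HX) (to_ob (toRL_ob A)) (to_ob (toRL_ob B))) :
  sp_equiv p q -> ofRL_span p = ofRL_span q.
Proof.
  destruct p as [[A1 a ha] e f], q as [[A2 b hb] e' g].
  pose proof (f_equal (@lo_ob X) e) as E1. cbn in E1. subst A1.
  pose proof (f_equal (@lo_ob X) e') as E2. cbn in E2. subst A2.
  unfold ofRL_span. cbn.
  rewrite (proof_irrelevance _ e eq_refl), (proof_irrelevance _ e' eq_refl). cbn.
  intros [u [v [[Huv Hvu] [H1 H2]]]]. cbn in u, v.
  apply (f_equal lh) in Huv, Hvu, H1, H2. cbn in Huv, Hvu, H1, H2.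
  pose proof (lh_c u) as Cu. pose proof (lh_c v) as Cv. cbn in Cu, Cv.
  rewrite Cu in H1. rewrite H1 in Huv, Hvu, H2. rewrite Cv in Hvu. rewrite Hvu in Huv, Cv.
  assert (Eab : a = b).
  { transitivity (a ;; b); [symmetry; exact Huv|]. transitivity (b ;; a); [|exact Cv].
    rewrite <- ha, <- hb. apply (R2 _ HX). }
  subst b. pose proof (lh_r g) as Rg. cbn in Rg.
  rewrite <- H2, <- Rg at 1. apply (R1 _ HX).
Qed.

Lemma ofRL_toRL_hom {A B : X} (f : hom A B) : ofRL_hom (toRL_hom f) = f.
Proof.
  symmetry. exact (ofRL_span_equiv _ _ (sp_equiv_rep_cls (LD_isLC HX) (toRL_span f))).
Qed.

Lemma toRL_ofRL_hom {A B : X}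
  (x : RHom (C := LD X HX) (to_ob (toRL_ob A)) (to_ob (toRL_ob B))) :
  toRL_hom (ofRL_hom x) = x.
Proof. destruct (RHom_LD_toRL x) as [f ->]. rewrite ofRL_toRL_hom. reflexivity. Qed.

End UnitRL.

Section UnitRLEquivalence.
Context {X : RData} (HX : isRC X).
Local Notation RLX := (RD (LD X HX) (LD_isLC HX)).

Definition ofRL : FData RLX X :=
  mkF (C := RLX) (fun M => lo_ob (to_ob M)) (fun M N x => ofRL_hom HX x).

Lemma ofRL_isRFunctor : isRFunctor ofRL.
Proof.
  split; [split|]; cbn [fm ofRL].
  - intros M. destruct (TObj_LD_toRL HX M) as [A ->].
    change (ofRL_hom HX (Ridm (toRL_ob HX A)) = idm A).
    rewrite <- (toRL_hom_idm HX). apply (ofRL_toRL_hom HX).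
  - intros M N P x y.
    destruct (TObj_LD_toRL HX M) as [A ->], (TObj_LD_toRL HX N) as [B ->],
      (TObj_LD_toRL HX P) as [C ->].
    destruct (RHom_LD_toRL HX x) as [f ->], (RHom_LD_toRL HX y) as [g ->].
    cbn [cmp rcat RD RCat]. rewrite <- (toRL_hom_cmp HX), !(ofRL_toRL_hom HX). reflexivity.
  - intros M N x. destruct (TObj_LD_toRL HX M) as [A ->], (TObj_LD_toRL HX N) as [B ->].
    destruct (RHom_LD_toRL HX x) as [f ->].
    cbn [rst RD]. rewrite <- (toRL_hom_rst HX), !(ofRL_toRL_hom HX). reflexivity.
Qed.

Lemma ntid_RL_isRTotNT :
  isRTotNT (F := fid X) (G := fcomp (toRL HX) ofRL) (ntid (fid X)) /\
  isRTotNT (F := fcomp (toRL HX) ofRL) (G := fid X) (ntid (fid X)).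
Proof.
  split; (split; [split|]); try (intros A; apply (rst_id HX)); intros A B f; unfold ntid;
    cbn [fm fo fid fcomp toRL ofRL]; rewrite ?(ofRL_toRL_hom HX), ?(cat_idr _ (rc_cat _ HX)).
  1, 3: symmetry; apply (R1 _ HX).
  all: symmetry; apply (cat_idl _ (rc_cat _ HX)).
Qed.

Definition RL_counit_inv : NT (fid RLX) (fcomp ofRL (toRL HX)) :=
  fun M => cls (C := LD X HX) (mkSpan (to_ob M) (to_eq M) (eta_L HX (to_ob M))).

Definition RL_counit : NT (fcomp ofRL (toRL HX)) (fid RLX) :=
  fun M => cls (@mkSpan (LD X HX) _ (to_ob M) (Lo_L HX (to_ob M)) eq_refl
                 (@tr (LCat X HX) _ _ _ (to_eq M) (LD_idm HX (Lo_L HX (to_ob M))))).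

Lemma RL_counit_inv_toRL (A : X) : RL_counit_inv (toRL_ob HX A) = idm (c := RLX) (toRL_ob HX A).
Proof. unfold RL_counit_inv. apply (f_equal cls), LD_span_ext; reflexivity. Qed.

Lemma RL_counit_toRL (A : X) : RL_counit (toRL_ob HX A) = idm (c := RLX) (toRL_ob HX A).
Proof. unfold RL_counit. apply (f_equal cls), LD_span_ext; reflexivity. Qed.

Lemma RL_counit_isRTotNT : isRTotNT RL_counit_inv /\ isRTotNT RL_counit.
Proof.
  pose proof (RD_isRC (LD_isLC HX)) as HR. pose proof (rc_cat _ HR) as KR.
  split; (split; [split|]).
  all: try (intros M; destruct (TObj_LD_toRL HX M) as [A ->]; unfold rtotal;
            rewrite ?RL_counit_inv_toRL, ?RL_counit_toRL; apply (rst_id HR)).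
  all: intros M N x; destruct (TObj_LD_toRL HX M) as [A ->], (TObj_LD_toRL HX N) as [B ->];
    rewrite ?RL_counit_inv_toRL, ?RL_counit_toRL; cbn [fm fo fid fcomp toRL ofRL];
    rewrite ?(toRL_ofRL_hom HX), ?(cat_idr _ KR), ?(cat_idl _ KR).
  all: try reflexivity; symmetry; apply (R1 _ HR).
Qed.

Lemma toRL_rc_equiv : rc_equiv (@isRNT) (toRL HX) /\ rc_equiv (@isRTotNT) (toRL HX).
Proof.
  pose proof (rc_cat _ HX) as K. pose proof (rc_cat _ (RD_isRC (LD_isLC HX))) as KR.
  destruct ntid_RL_isRTotNT as [Hu Hu'], RL_counit_isRTotNT as [Hv Hv'].
  assert (Huu : nat_iso (F := fid X) (G := fcomp (toRL HX) ofRL) (ntid (fid X)) (ntid (fid X))).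
  { split; [apply Hu|]. intros A. split; apply (cat_idl _ K). }
  assert (Hvv : nat_iso RL_counit_inv RL_counit).
  { split; [apply Hv|]. intros M. destruct (TObj_LD_toRL HX M) as [A ->].
    rewrite RL_counit_inv_toRL, RL_counit_toRL. split; apply (cat_idl _ KR). }
  pose proof (fun P2 => rc_equiv_of_nat_isos P2 (F := toRL HX) ofRL _ _ _ _ ofRL_isRFunctor Huu Hvv)
    as Hequiv.
  split; apply Hequiv; try assumption.
  - exact (proj1 Hu).
  - exact (proj1 Hu').
  - exact (proj1 Hv).
  - exact (proj1 Hv').
Qed.

End UnitRLEquivalence.

Section UnitRLNaturality.
Context {X Y : RData} (HX : isRC X) (HY : isRC Y).

Lemma toRL_natural {F : FData X Y} (HF : isRFunctor F) :
  feq (fcomp (toRL HX) (RF (LD_isLC HX) (LD_isLC HY) (LF_isLFunctor HX HY HF)))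
      (fcomp F (toRL HY)).
Proof.
  assert (Hid : forall A, LF_ob HF (to_ob (toRL_ob HX A)) = to_ob (toRL_ob HY (F A)))
    by (intros A; apply LObj_ext, (f_id _ (proj1 HF))).
  split.
  - intros A. apply TObj_ext, Hid.
  - intros A B f. cbn [fm fo fcomp toRL]. unfold toRL_hom.
    rewrite (RF_cls (LD_isLC HX) (LD_isLC HY)).
    apply cls_JMeq; try apply Hid.
    + apply LObj_ext, (proj2 HF).
    + apply LHom_JMeq; [apply LObj_ext, (proj2 HF) | apply Hid | reflexivity].
Qed.

Lemma toRL_natural_2cell {F G : FData X Y} (HF : isRFunctor F) (HG : isRFunctor G)
  {a : NT F G} (Ha : isRNT a) :
  nteq (whiskL (toRL HX) (RN (LD_isLC HX) (LD_isLC HY) (LF_isLFunctor HX HY HF)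
                            (LF_isLFunctor HX HY HG) (LN HX HY HF HG Ha)))
       (whiskR a (toRL HY)).
Proof.
  intros A. unfold whiskL, whiskR, RN. cbn [fm fo toRL]. unfold toRL_hom.
  assert (HFa : LF_ob HF (mkLObj A (idm A) (rst_id HX A))
                = mkLObj (F A) (rst (a A)) (rst_rst HY (a A))).
  { apply LObj_ext. rewrite (f_id _ (proj1 HF)). symmetry. apply (proj1 Ha A). }
  apply cls_JMeq; cbn; try (apply LObj_ext, f_id; apply (proj1 HF) || apply (proj1 HG)).
  - exact HFa.
  - apply LHom_JMeq; [exact HFa | apply LObj_ext, (f_id _ (proj1 HG)) |].
    cbn. rewrite (f_id _ (proj1 HF)), (cat_idl _ (rc_cat _ HY)). reflexivity.
Qed.

End UnitRLNaturality.

(** * C is equivalent to L[R[C]] *)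

Section UnitLR.
Context {C : LData} (HC : isLC C).
Let idl := cat_idl _ (lc_cat _ HC).
Let assoc := cat_assoc _ (lc_cat _ HC).
Local Notation LRC := (LD (RD C HC) (RD_isRC HC)).

Definition Ltot (M : C) : TObj C := mkTObj (Lo M) (L1a _ HC M) (L1b _ HC M).

Definition eta_span (M : C) : Span C (Lo M) (Lo M) := mkSpan M eq_refl (eta M).

Lemma eta_span_rst (M : C) :
  @rst (RD C HC) (Ltot M) (Ltot M) (cls (eta_span M)) = cls (eta_span M).
Proof. apply (Rrst_cls HC). Qed.

Definition toLR_ob (M : C) : LObj (RD C HC) :=
  mkLObj (X := RD C HC) (Ltot M) (cls (eta_span M)) (eta_span_rst M).

Definition toLR_span {M N : C} (f : hom M N) : Span C (Lo M) (Lo N) :=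
  mkSpan M eq_refl (f ;; eta N).

Lemma toLR_span_rst {M N : C} (f : hom M N) :
  @rst (RD C HC) (Ltot M) (Ltot N) (cls (toLR_span f)) = lo_id (toLR_ob M).
Proof. apply (Rrst_cls HC). Qed.

Lemma toLR_span_eta {M N : C} (f : hom M N) :
  @cmp (RD C HC) (Ltot M) (Ltot N) (Ltot N) (cls (toLR_span f)) (lo_id (toLR_ob N))
  = cls (toLR_span f).
Proof.
  cbn. rewrite (Rcmp_cls HC (toLR_span f) (eta_span N) M eq_refl (idm _) f).
  - reflexivity.
  - apply is_pullback_monic; [exact (lc_cat _ HC) | apply (L2 _ HC)].
  - apply idl.
Qed.

Definition toLR_hom {M N : C} (f : hom M N) : LHom (RD C HC) (toLR_ob M) (toLR_ob N) :=
  mkLHom (x := toLR_ob M) (y := toLR_ob N) (cls (toLR_span f)) (toLR_span_rst f) (toLR_span_eta f).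

Definition toLR : FData C LRC := mkF (D := LRC) toLR_ob (fun M N f => toLR_hom f).

Lemma toLR_isFunctor : isFunctor toLR.
Proof.
  split.
  - intros M. apply LHom_ext. cbn. apply (f_equal cls), mkSpan_ext, idl.
  - intros M N P f g. apply LHom_ext. cbn.
    rewrite (Rcmp_cls HC (toLR_span f) (toLR_span g) M eq_refl (idm _) f).
    + apply (f_equal cls), mkSpan_ext, assoc.
    + apply is_pullback_monic; [exact (lc_cat _ HC) | apply (L2 _ HC)].
    + apply idl.
Qed.

(* Every restriction idempotent of a total object [M] of R[C] is the class of
   a monic [dom_incl x : dom_ob x -> M]; on the idempotents [idm M] we choose
   [M] itself, which makes the inverse functor commute with L on the nose. *)
Definition dom_span (x : LObj (RD C HC)) : Span C (to_ob (lo_ob x)) (to_ob (lo_ob x)) :=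
  if ClassicalEpsilon.excluded_middle_informative (lo_id x = Ridm (lo_ob x))
  then mkSpan (to_ob (lo_ob x)) (to_eq (lo_ob x)) (idm _)
  else rep (lo_id x).

Definition dom_ob (x : LObj (RD C HC)) : C := sp_ob (dom_span x).

Definition dom_incl (x : LObj (RD C HC)) : hom (dom_ob x) (to_ob (lo_ob x)) :=
  sp_eta (dom_span x).

Lemma dom_span_spec (x : LObj (RD C HC)) :
  lo_id x = cls (mkSpan (dom_ob x) (sp_eq (dom_span x)) (dom_incl x)).
Proof.
  unfold dom_ob, dom_incl, dom_span.
  destruct (ClassicalEpsilon.excluded_middle_informative _) as [H|H].
  - rewrite H. unfold Ridm. apply f_equal, mkSpan_ext. symmetry. apply (to_eta (lo_ob x)).
  - transitivity (Rrst (lo_id x)); [symmetry; exact (lo_ok x) | reflexivity].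
Qed.

Lemma dom_incl_monic (x : LObj (RD C HC)) : monic (dom_incl x).
Proof. apply (sp_eta_monic HC). Qed.

Definition through_dom (x x' : LObj (RD C HC)) (t : hom (dom_ob x) (dom_ob x'))
  : Span C (to_ob (lo_ob x)) (to_ob (lo_ob x')) :=
  mkSpan (dom_ob x) (sp_eq (dom_span x)) (t ;; dom_incl x').

Lemma ofLR_hom_exists {x x' : LObj (RD C HC)} (y : LHom (RD C HC) x x') :
  exists t : hom (dom_ob x) (dom_ob x'), cls (through_dom x x' t) = lh y.
Proof.
  (* [rst (lh y) = lo_id x] makes the source of a representative of [lh y]
     isomorphic to [dom_ob x], and [lh y ; lo_id x' = lh y] makes its arrow
     factor through [dom_incl x']. *)
  pose proof (lh_r y) as Hr. pose proof (lh_c y) as Hc. cbn in Hr, Hc.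
  rewrite <- (cls_rep (lh y)) in Hr, Hc |- *. set (p := rep (lh y)) in *.
  rewrite (Rrst_cls HC), (dom_span_spec x) in Hr. apply (cls_eqP HC) in Hr.
  destruct Hr as [al [phi [[Ha1 Ha2] [Ha3 _]]]].
  rewrite (dom_span_spec x') in Hc.
  destruct (span_pullback_exists HC p (mkSpan (dom_ob x') (sp_eq (dom_span x')) (dom_incl x')))
    as [W [eW [m [k [Hpb Hm]]]]].
  rewrite (Rcmp_cls HC _ _ W eW m k Hpb Hm) in Hc.
  apply (cls_eqP HC), (sp_equiv_sym HC) in Hc. destruct Hc as [psi [_ [_ [_ Hp]]]].
  change (al ;; dom_incl x = sp_eta p) in Ha3.
  change (psi ;; (k ;; dom_incl x') = sp_mor p) in Hp.
  exists (phi ;; psi ;; k). apply (cls_eqP HC). exists phi, al. repeat split; auto.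
  - change (phi ;; sp_eta p = dom_incl x). rewrite <- Ha3, <- assoc, Ha2. apply idl.
  - change (phi ;; sp_mor p = ((phi ;; psi) ;; k) ;; dom_incl x'). rewrite <- Hp, !assoc.
    reflexivity.
Qed.

Definition ofLR_hom {x x' : LObj (RD C HC)} (y : LHom (RD C HC) x x')
  : hom (dom_ob x) (dom_ob x') :=
  proj1_sig (constructive_indefinite_description _ (ofLR_hom_exists y)).

Lemma ofLR_hom_spec {x x' : LObj (RD C HC)} (y : LHom (RD C HC) x x') :
  cls (through_dom x x' (ofLR_hom y)) = lh y.
Proof. exact (proj2_sig (constructive_indefinite_description _ (ofLR_hom_exists y))). Qed.

Lemma ofLR_hom_unique {x x' : LObj (RD C HC)} (y : LHom (RD C HC) x x')
  (t : hom (dom_ob x) (dom_ob x')) : cls (through_dom x x' t) = lh y -> t = ofLR_hom y.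
Proof.
  rewrite <- (ofLR_hom_spec y). intros H. apply (cls_eqP HC) in H.
  destruct H as [chi [_ [_ [H1 H2]]]].
  change (hom (dom_ob x) (dom_ob x)) in chi.
  change (chi ;; dom_incl x = dom_incl x) in H1.
  change (chi ;; (ofLR_hom y ;; dom_incl x') = t ;; dom_incl x') in H2.
  assert (Hchi : chi = idm _) by (apply (dom_incl_monic x); rewrite H1, idl; reflexivity).
  rewrite Hchi, idl in H2. apply (dom_incl_monic x'). symmetry. exact H2.
Qed.

Definition ofLR : FData LRC C := mkF (C := LRC) dom_ob (fun x x' y => ofLR_hom y).

Lemma ofLR_isFunctor : isFunctor ofLR.
Proof.
  split.
  - intros x. cbn. symmetry. apply ofLR_hom_unique. cbn. rewrite (dom_span_spec x).
    apply f_equal, mkSpan_ext, idl.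
  - intros x x' x'' y z. cbn. symmetry. apply ofLR_hom_unique. cbn.
    rewrite <- (ofLR_hom_spec y), <- (ofLR_hom_spec z).
    rewrite (Rcmp_cls HC (through_dom x x' (ofLR_hom y)) (through_dom x' x'' (ofLR_hom z))
               (dom_ob x) (sp_eq (dom_span x)) (idm _) (ofLR_hom y)).
    + apply f_equal, mkSpan_ext, assoc.
    + apply is_pullback_monic; [exact (lc_cat _ HC) | apply dom_incl_monic].
    + apply idl.
Qed.

End UnitLR.

Lemma eta_Lo_JMeq {C : LData} (HC : isLC C) (M : C) : JMeq (eta (Lo M)) (idm (Lo M)).
Proof. rewrite <- (L1b _ HC M). symmetry. apply tr_JMeq. Qed.

Lemma cmp_eta_Lo_JMeq {C : LData} (HC : isLC C) (M : C) {Z : C} (h : hom Z (Lo M)) :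
  JMeq (h ;; eta (Lo M)) h.
Proof.
  assert (E : eta (Lo M) = tr (eq_sym (L1a _ HC M)) (idm (Lo M))).
  { rewrite <- (L1b _ HC M). symmetry. apply tr_symK. }
  rewrite E, <- tr_cmp, (cat_idr _ (lc_cat _ HC)). apply tr_JMeq.
Qed.

Section UnitLRLocal.
Context {C : LData} (HC : isLC C).
Let idl := cat_idl _ (lc_cat _ HC).
Let idr := cat_idr _ (lc_cat _ HC).
Let assoc := cat_assoc _ (lc_cat _ HC).
Local Notation LRC := (LD (RD C HC) (RD_isRC HC)).

Lemma dom_span_Lo (x : LObj (RD C HC)) :
  dom_span HC (Lo_L (RD_isRC HC) x) = mkSpan (to_ob (lo_ob x)) (to_eq (lo_ob x)) (idm _).
Proof.
  unfold dom_span. destruct (ClassicalEpsilon.excluded_middle_informative _) as [H|H].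
  - reflexivity.
  - exfalso. apply H. reflexivity.
Qed.

Definition ofLR_obj (x : LObj (RD C HC)) : dom_ob HC (Lo_L (RD_isRC HC) x) = Lo (dom_ob HC x) :=
  eq_trans (f_equal (@sp_ob C _ _) (dom_span_Lo x)) (eq_sym (sp_eq (dom_span HC x))).

Lemma cmp_sp_eta_idm (M : TObj C) (s : Span C (to_ob M) (to_ob M))
  (E : s = mkSpan (to_ob M) (to_eq M) (idm _)) {U : C} (t : hom U (sp_ob s)) :
  t ;; sp_eta s = tr (f_equal (@sp_ob C _ _) E) t.
Proof. subst s. cbn. unfold sp_eta. cbn. rewrite (to_eta M). apply idr. Qed.

Lemma ofLR_eta (x : LObj (RD C HC)) :
  tr (ofLR_obj x) (ofLR_hom HC (eta_L (RD_isRC HC) x)) = eta (dom_ob HC x).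
Proof.
  assert (H : ofLR_hom HC (eta_L (RD_isRC HC) x) ;; dom_incl HC (Lo_L (RD_isRC HC) x)
              = dom_incl HC x).
  { pose proof (ofLR_hom_spec HC (eta_L (RD_isRC HC) x)) as H. cbn in H.
    rewrite (dom_span_spec HC x) in H. apply (cls_eqP HC) in H.
    destruct H as [chi [_ [_ [H1 H2]]]].
    change (chi ;; dom_incl HC x = dom_incl HC x) in H1.
    change (chi ;; dom_incl HC x
            = ofLR_hom HC (eta_L (RD_isRC HC) x) ;; dom_incl HC (Lo_L (RD_isRC HC) x)) in H2.
    rewrite <- H2. exact H1. }
  unfold ofLR_obj. rewrite <- tr_tr, <- (cmp_sp_eta_idm (lo_ob x) _ (dom_span_Lo x)).
  change (tr (eq_sym (sp_eq (dom_span HC x)))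
             (ofLR_hom HC (eta_L (RD_isRC HC) x) ;; dom_incl HC (Lo_L (RD_isRC HC) x))
          = eta (dom_ob HC x)).
  rewrite H. unfold dom_incl, sp_eta. apply tr_symK.
Qed.

Lemma toLR_obj (M : C) : toLR_ob HC (Lo M) = Lo_L (RD_isRC HC) (toLR_ob HC M).
Proof.
  apply LObj_JMeq.
  - apply TObj_ext, (L1a _ HC).
  - apply cls_JMeq; try apply (L1a _ HC); [reflexivity | apply (eta_Lo_JMeq HC)].
Qed.

Lemma toLR_eta (M : C) :
  @tr LRC _ _ _ (toLR_obj M) (fm (toLR HC) (eta M)) = eta (toLR HC M).
Proof.
  apply (LHom_tr (RD_isRC HC)), cls_JMeq;
    [reflexivity | apply (L1a _ HC) | reflexivity | apply (cmp_eta_Lo_JMeq HC)].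
Qed.

Lemma LR_unit_exists (M : C) :
  exists uv : hom M (dom_ob HC (toLR_ob HC M)) * hom (dom_ob HC (toLR_ob HC M)) M,
    is_inverse (fst uv) (snd uv) /\ fst uv ;; dom_incl HC (toLR_ob HC M) = eta M.
Proof.
  pose proof (dom_span_spec HC (toLR_ob HC M)) as H. apply (cls_eqP HC) in H.
  destruct H as [u [v [Huv [H _]]]]. exists (u, v). split; assumption.
Qed.

Definition LR_unit_pair (M : C) :=
  proj1_sig (constructive_indefinite_description _ (LR_unit_exists M)).

Definition LR_unit : NT (fid C) (fcomp (toLR HC) (ofLR HC)) := fun M => fst (LR_unit_pair M).
Definition LR_unit_inv : NT (fcomp (toLR HC) (ofLR HC)) (fid C) := fun M => snd (LR_unit_pair M).

Lemma LR_unit_spec (M : C) :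
  is_inverse (LR_unit M) (LR_unit_inv M) /\ LR_unit M ;; dom_incl HC (toLR_ob HC M) = eta M.
Proof. exact (proj2_sig (constructive_indefinite_description _ (LR_unit_exists M))). Qed.

Lemma LR_unit_inv_eta (M : C) : LR_unit_inv M ;; eta M = dom_incl HC (toLR_ob HC M).
Proof.
  destruct (LR_unit_spec M) as [[_ H2] H3].
  rewrite <- H3, <- assoc. transitivity (idm _ ;; dom_incl HC (toLR_ob HC M)).
  - f_equal. exact H2.
  - apply idl.
Qed.

Lemma ofLR_toLR_hom {M N : C} (f : hom M N) :
  ofLR_hom HC (toLR_hom HC f) = LR_unit_inv M ;; f ;; LR_unit N.
Proof.
  symmetry. apply ofLR_hom_unique. apply (cls_eqP HC).
  destruct (LR_unit_spec M) as [Hinv _]. destruct (LR_unit_spec N) as [_ HN].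
  exists (LR_unit_inv M), (LR_unit M). split; [split; apply Hinv|]. split.
  - apply LR_unit_inv_eta.
  - change (LR_unit_inv M ;; (f ;; eta N)
            = (LR_unit_inv M ;; f ;; LR_unit N) ;; dom_incl HC (toLR_ob HC N)).
    rewrite <- HN, !assoc. reflexivity.
Qed.

Lemma LR_unit_nat_iso : nat_iso LR_unit LR_unit_inv.
Proof.
  split; [|intros M; apply LR_unit_spec].
  intros M N f. cbn [fm fo fid fcomp toLR ofLR]. rewrite ofLR_toLR_hom.
  destruct (LR_unit_spec M) as [[HM _] _].
  rewrite <- !assoc. transitivity (idm M ;; f ;; LR_unit N); [rewrite idl; reflexivity|].
  do 2 f_equal. symmetry. exact HM.
Qed.

End UnitLRLocal.

Section CounitLR.
Context {C : LData} (HC : isLC C).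
Let idl := cat_idl _ (lc_cat _ HC).
Local Notation LRC := (LD (RD C HC) (RD_isRC HC)).

Definition LR_counit_inv_span (x : LObj (RD C HC)) : Span C (to_ob (lo_ob x)) (Lo (dom_ob HC x)) :=
  mkSpan (dom_ob HC x) (sp_eq (dom_span HC x)) (eta (dom_ob HC x)).

Definition LR_counit_span (x : LObj (RD C HC)) : Span C (Lo (dom_ob HC x)) (to_ob (lo_ob x)) :=
  mkSpan (dom_ob HC x) eq_refl (dom_incl HC x).

Lemma eta_monic_pullback (M : C) : is_pullback (idm M) (idm M) (eta M) (eta M).
Proof. apply is_pullback_monic_idm; [exact (lc_cat _ HC) | apply (L2 _ HC)]. Qed.

Lemma dom_incl_pullback (x : LObj (RD C HC)) :
  is_pullback (idm _) (idm _) (dom_incl HC x) (dom_incl HC x).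
Proof. apply is_pullback_monic_idm; [exact (lc_cat _ HC) | apply dom_incl_monic]. Qed.

Lemma LR_counit_inv_rst (x : LObj (RD C HC)) :
  @rst (RD C HC) (lo_ob x) (Ltot HC (dom_ob HC x)) (cls (LR_counit_inv_span x)) = lo_id x.
Proof. cbn. rewrite (Rrst_cls HC), (dom_span_spec HC x). reflexivity. Qed.

Lemma LR_counit_inv_c (x : LObj (RD C HC)) :
  @cmp (RD C HC) (lo_ob x) (Ltot HC (dom_ob HC x)) (Ltot HC (dom_ob HC x))
    (cls (LR_counit_inv_span x)) (lo_id (toLR_ob HC (dom_ob HC x)))
  = cls (LR_counit_inv_span x).
Proof.
  cbn. rewrite (Rcmp_cls HC (LR_counit_inv_span x) (eta_span (dom_ob HC x)) (dom_ob HC x)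
                  (sp_eq (dom_span HC x)) (idm _) (idm _) (eta_monic_pullback _) (idl _ _ _)).
  apply f_equal, mkSpan_ext, idl.
Qed.

Lemma LR_counit_rst (x : LObj (RD C HC)) :
  @rst (RD C HC) (Ltot HC (dom_ob HC x)) (lo_ob x) (cls (LR_counit_span x))
  = lo_id (toLR_ob HC (dom_ob HC x)).
Proof. apply (Rrst_cls HC). Qed.

Lemma LR_counit_c (x : LObj (RD C HC)) :
  @cmp (RD C HC) (Ltot HC (dom_ob HC x)) (lo_ob x) (lo_ob x) (cls (LR_counit_span x))
    (lo_id x) = cls (LR_counit_span x).
Proof.
  cbn. rewrite (dom_span_spec HC x).
  rewrite (Rcmp_cls HC (LR_counit_span x)
             (mkSpan (dom_ob HC x) (sp_eq (dom_span HC x)) (dom_incl HC x))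
             (dom_ob HC x) eq_refl (idm _) (idm _) (dom_incl_pullback x) (idl _ _ _)).
  apply f_equal, mkSpan_ext, idl.
Qed.

Definition LR_counit_inv : NT (fid LRC) (fcomp (ofLR HC) (toLR HC)) :=
  fun x => mkLHom (X := RD C HC) (x := x) (y := toLR_ob HC (dom_ob HC x))
             (cls (LR_counit_inv_span x)) (LR_counit_inv_rst x) (LR_counit_inv_c x).

Definition LR_counit : NT (fcomp (ofLR HC) (toLR HC)) (fid LRC) :=
  fun x => mkLHom (X := RD C HC) (x := toLR_ob HC (dom_ob HC x)) (y := x)
             (cls (LR_counit_span x)) (LR_counit_rst x) (LR_counit_c x).

Lemma LR_counit_inverse (x : LObj (RD C HC)) :
  is_inverse (C := LRC) (LR_counit_inv x) (LR_counit x).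
Proof.
  split; apply LHom_ext; cbn.
  - rewrite (Rcmp_cls HC (LR_counit_inv_span x) (LR_counit_span x) (dom_ob HC x)
               (sp_eq (dom_span HC x)) (idm _) (idm _) (eta_monic_pullback _) (idl _ _ _)).
    rewrite (dom_span_spec HC x). apply f_equal, mkSpan_ext, idl.
  - rewrite (Rcmp_cls HC (LR_counit_span x) (LR_counit_inv_span x) (dom_ob HC x) eq_refl
               (idm _) (idm _) (dom_incl_pullback x) (idl _ _ _)).
    apply f_equal, mkSpan_ext, idl.
Qed.

Lemma LR_counit_inv_nat_iso : nat_iso LR_counit_inv LR_counit.
Proof.
  split; [|exact LR_counit_inverse].
  intros x x' y. apply LHom_ext. cbn. rewrite <- (ofLR_hom_spec HC y).
  rewrite (Rcmp_cls HC (through_dom HC x x' (ofLR_hom HC y)) (LR_counit_inv_span x')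
             (dom_ob HC x) (sp_eq (dom_span HC x)) (idm _) (ofLR_hom HC y)).
  - rewrite (Rcmp_cls HC (LR_counit_inv_span x) (toLR_span (ofLR_hom HC y)) (dom_ob HC x)
               (sp_eq (dom_span HC x)) (idm _) (idm _) (eta_monic_pullback _) (idl _ _ _)).
    apply f_equal, mkSpan_ext. symmetry. apply idl.
  - apply is_pullback_monic; [exact (lc_cat _ HC) | apply dom_incl_monic].
  - apply idl.
Qed.

End CounitLR.

Section UnitLREquivalence.
Context {C : LData} (HC : isLC C).
Let HLR : isLC (LD (RD C HC) (RD_isRC HC)) := LD_isLC (RD_isRC HC).

Lemma toLR_isLFunctor : isLFunctor (toLR HC).
Proof.
  refine (Build_isLFunctor _ _ _ (toLR_isFunctor HC) (toLR_obj HC) (toLR_eta HC) _).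
  intros M N P f p1 p2.
  exact (equivalence_preserves_pullback (lc_cat _ HC) (lc_cat _ HLR) (toLR_isFunctor HC)
           _ _ _ _ (LR_unit_nat_iso HC) (LR_counit_inv_nat_iso HC) _ _ _ _).
Qed.

Lemma ofLR_isLFunctor : isLFunctor (ofLR HC).
Proof.
  refine (Build_isLFunctor _ _ _ (ofLR_isFunctor HC) (ofLR_obj HC) (ofLR_eta HC) _).
  intros M N P f p1 p2.
  exact (equivalence_preserves_pullback (lc_cat _ HLR) (lc_cat _ HC) (ofLR_isFunctor HC)
           _ _ _ _ (LR_counit_inv_nat_iso HC) (LR_unit_nat_iso HC) _ _ _ _).
Qed.

Lemma toLR_lc_equiv : lc_equiv (@isLNT) (toLR HC) /\ lc_equiv (@isLTotNT) (toLR HC).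
Proof.
  pose proof (LR_unit_nat_iso HC) as Hu. pose proof (LR_counit_inv_nat_iso HC) as Hv.
  pose proof (nat_iso_sym (lc_cat _ HC) _ _ Hu) as Hu'.
  pose proof (nat_iso_sym (lc_cat _ HLR) _ _ Hv) as Hv'.
  pose proof (fun P2 => lc_equiv_of_nat_isos P2 (F := toLR HC) (ofLR HC) _ _ _ _
                           ofLR_isLFunctor Hu Hv) as Hequiv.
  split; apply Hequiv.
  - exact (proj1 Hu).
  - exact (proj1 Hu').
  - exact (proj1 Hv).
  - exact (proj1 Hv').
  - exact (nat_iso_isLTotNT HC _ _ Hu).
  - exact (nat_iso_isLTotNT HC _ _ Hu').
  - exact (nat_iso_isLTotNT HLR _ _ Hv).
  - exact (nat_iso_isLTotNT HLR _ _ Hv').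
Qed.

End UnitLREquivalence.

Section UnitLRNaturality.
Context {C D : LData} (HC : isLC C) (HD : isLC D).

Lemma LF_RF_toLR_ob {F : FData C D} (HF : isLFunctor F) (M : C) :
  LF_ob (RF_isRFunctor HC HD HF) (toLR_ob HC M) = toLR_ob HD (F M).
Proof.
  apply LObj_JMeq; [apply TObj_ext, (lf_obj _ HF)|]. cbn [lo_id lo_ob toLR_ob].
  pose proof (RF_cls HC HD HF (M := Ltot HC M) (N := Ltot HC M) (eta_span M)) as E.
  cbn [to_ob Ltot] in E. rewrite E.
  apply cls_JMeq; try apply (lf_obj _ HF); [reflexivity|]. cbn.
  rewrite <- (lf_eta _ HF M). symmetry. apply tr_JMeq.
Qed.

Lemma toLR_natural {F : FData C D} (HF : isLFunctor F) :
  feq (fcomp (toLR HC) (LF (RD_isRC HC) (RD_isRC HD) (RF_isRFunctor HC HD HF)))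
      (fcomp F (toLR HD)).
Proof.
  split; [apply LF_RF_toLR_ob|].
  intros M N f. apply LHom_JMeq; try apply LF_RF_toLR_ob.
  cbn [fm fo fcomp LF LF_hom LF_ob lh lo_ob toLR toLR_hom toLR_ob].
  pose proof (RF_cls HC HD HF (M := Ltot HC M) (N := Ltot HC N) (toLR_span f)) as E.
  cbn [to_ob Ltot] in E. rewrite E.
  apply cls_JMeq; try apply (lf_obj _ HF); [reflexivity|]. cbn.
  rewrite (f_cmp _ (lf_fun _ HF)), <- (lf_eta _ HF N). apply cmp_tr_JMeq.
Qed.

Lemma toLR_natural_2cell {F G : FData C D} (HF : isLFunctor F) (HG : isLFunctor G)
  {a : NT F G} (Ha : isLNT a) :
  nteq (whiskL (toLR HC) (LN (RD_isRC HC) (RD_isRC HD) (RF_isRFunctor HC HD HF)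
                            (RF_isRFunctor HC HD HG) (RN_isRNT HC HD HF HG a Ha)))
       (whiskR a (toLR HD)).
Proof.
  intros M. unfold whiskL, whiskR. apply LHom_JMeq; try apply LF_RF_toLR_ob.
  cbn [fm fo LN lh toLR toLR_hom LF_ob lo_id toLR_ob lo_ob].
  assert (E : Rcmp HD (fm (RF HC HD HF) (A := Ltot HC M) (B := Ltot HC M) (cls (eta_span M)))
                      (RN HC HD HF HG a (Ltot HC M))
              = cls (mkSpan (F M) (sp_eq (RF_span HF (eta_span M))) (a M ;; fm G (eta M)))).
  { etransitivity; [exact (RN_cls HC HD HF HG a (M := Ltot HC M) (N := Ltot HC M) (eta_span M))|].
    apply f_equal, mkSpan_ext, Ha. }
  change (JMeq (Rcmp HD (fm (RF HC HD HF) (A := Ltot HC M) (B := Ltot HC M) (cls (eta_span M)))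
                        (RN HC HD HF HG a (Ltot HC M)))
               (cls (toLR_span (a M)))).
  rewrite E. apply cls_JMeq; try apply (lf_obj _ HF); try apply (lf_obj _ HG); [reflexivity|].
  cbn. rewrite <- (lf_eta _ HG M). apply cmp_tr_JMeq.
Qed.

End UnitLRNaturality.

Theorem theorem4p19 :
  (* well-definedness of the 2-functors L_lax : RCat_lax -> LCat_lax and
     R_lax : LCat_lax -> RCat_lax on objects, 1-cells and 2-cells *)
  exists (hL : forall (X : RData) (HX : isRC X), isLC (LD X HX))
         (hR : forall (C : LData) (HC : isLC C), isRC (RD C HC))
         (hLF : forall (X Y : RData) (HX : isRC X) (HY : isRC Y)
                       (F : FData X Y) (HF : isRFunctor F), isLFunctor (LF HX HY HF))
         (hRF : forall (C D : LData) (HC : isLC C) (HD : isLC D)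
                       (F : FData C D) (HF : isLFunctor F), isRFunctor (RF HC HD HF))
         (hRN : forall (C D : LData) (HC : isLC C) (HD : isLC D) (F G : FData C D)
                       (HF : isLFunctor F) (HG : isLFunctor G) (a : NT F G),
                  isLNT a -> isRNT (RN HC HD HF HG a)),
    (forall (X Y : RData) (HX : isRC X) (HY : isRC Y) (F G : FData X Y)
            (HF : isRFunctor F) (HG : isRFunctor G) (a : NT F G) (Ha : isRNT a),
        isLNT (LN HX HY HF HG Ha)) /\
    (* the 2-equivalence RCat_lax ~ LCat_lax: unit 1 => R L *)
    (exists u : forall (X : RData) (HX : isRC X), FData X (RD (LD X HX) (hL X HX)),
      (forall X HX, isRFunctor (u X HX)) /\
      (forall (X Y : RData) (HX : isRC X) (HY : isRC Y) (F : FData X Y) (HF : isRFunctor F),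
         feq (fcomp (u X HX) (RF (hL X HX) (hL Y HY) (hLF X Y HX HY F HF)))
             (fcomp F (u Y HY))) /\
      (forall (X Y : RData) (HX : isRC X) (HY : isRC Y) (F G : FData X Y)
              (HF : isRFunctor F) (HG : isRFunctor G) (a : NT F G) (Ha : isRNT a),
         nteq (whiskL (u X HX) (RN (hL X HX) (hL Y HY) (hLF X Y HX HY F HF)
                                   (hLF X Y HX HY G HG) (LN HX HY HF HG Ha)))
              (whiskR a (u Y HY))) /\
      (forall X HX, rc_equiv (@isRNT) (u X HX)) /\
      (forall X HX, rc_equiv (@isRTotNT) (u X HX))) /\
    (* ... and 1 => L R *)
    (exists v : forall (C : LData) (HC : isLC C), FData C (LD (RD C HC) (hR C HC)),
      (forall C HC, isLFunctor (v C HC)) /\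
      (forall (C D : LData) (HC : isLC C) (HD : isLC D) (F : FData C D) (HF : isLFunctor F),
         feq (fcomp (v C HC) (LF (hR C HC) (hR D HD) (hRF C D HC HD F HF)))
             (fcomp F (v D HD))) /\
      (forall (C D : LData) (HC : isLC C) (HD : isLC D) (F G : FData C D)
              (HF : isLFunctor F) (HG : isLFunctor G) (a : NT F G) (Ha : isLNT a),
         nteq (whiskL (v C HC) (LN (hR C HC) (hR D HD) (hRF C D HC HD F HF)
                                   (hRF C D HC HD G HG) (hRN C D HC HD F G HF HG a Ha)))
              (whiskR a (v D HD))) /\
      (forall C HC, lc_equiv (@isLNT) (v C HC)) /\
      (forall C HC, lc_equiv (@isLTotNT) (v C HC))) /\
    (* restriction to RCat ~ LCat: L and R preserve total 2-cells *)
    (forall (X Y : RData) (HX : isRC X) (HY : isRC Y) (F G : FData X Y)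
            (HF : isRFunctor F) (HG : isRFunctor G) (a : NT F G) (Ha : isRNT a),
        isRTotNT a -> isLTotNT (LN HX HY HF HG Ha)) /\
    (forall (C D : LData) (HC : isLC C) (HD : isLC D) (F G : FData C D)
            (HF : isLFunctor F) (HG : isLFunctor G) (a : NT F G),
        isLTotNT a -> isRTotNT (RN HC HD HF HG a)).
Proof.
  exists (fun X HX => LD_isLC HX), (fun C HC => RD_isRC HC),
    (fun X Y HX HY F HF => LF_isLFunctor HX HY HF),
    (fun C D HC HD F HF => RF_isRFunctor HC HD HF),
    (fun C D HC HD F G HF HG a => RN_isRNT HC HD HF HG a).
  split; [intros; apply LN_isLNT|].
  split.
  { exists (fun X HX => toRL HX). split; [|split; [|split; [|split]]]; intros.
    - apply toRL_isRFunctor.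
    - apply toRL_natural.
    - apply toRL_natural_2cell.
    - exact (proj1 (toRL_rc_equiv HX)).
    - exact (proj2 (toRL_rc_equiv HX)). }
  split.
  { exists (fun C HC => toLR HC). split; [|split; [|split; [|split]]]; intros.
    - apply toLR_isLFunctor.
    - apply toLR_natural.
    - apply toLR_natural_2cell.
    - exact (proj1 (toLR_lc_equiv HC)).
    - exact (proj2 (toLR_lc_equiv HC)). }
  split; intros * Htot.
  - exact (LN_isLTotNT HX HY HF HG Ha (proj2 Htot)).
  - exact (RN_isRTotNT HC HD HF HG a Htot).
Qed.
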